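(* Let $\Omega$ be the set of all valid triples $\{\varphi\}\ a\ \{\psi\}$ with $a\in\mathsf{Act}$ and $\varphi,\psi\subseteq\mathcal W(\Sigma)$. For every well-formed program $C$ and all assertions $\varphi,\psi\subseteq\mathcal W(\Sigma)$: if $\vDash\{\varphi\}\ C\ \{\psi\}$, then $\Omega\vdash\{\varphi\}\ C\ \{\psi\}$.
   Context: Semiring and weights. Let $\mathcal A=\langle U,+,\cdot,\mathbf 0,\mathbf 1\rangle$ be a partial semiring: $\langle U,+,\mathbf 0\rangle$ is a commutative monoid in which $+$ may be partial, $\langle U,\cdot,\mathbf 1\rangle$ is a monoid with $\cdot$ total, $\cdot$ distributes over $+$ on both sides, and $\mathbf 0\cdot u=u\cdot\mathbf 0=\mathbf 0$. Its natural order is $u\le v$ iff $u+w=v$ for some $w$. Assume $\mathcal A$ is naturally ordered ($\le$ is a partial order), Scott continuous (for every directed $D\subseteq U$ and $y\in U$: $\sup_{x\in D}(x+y)=(\sup D)+y$, $\sup_{x\in D}(x\cdot y)=(\sup D)\cdot y$, $\sup_{x\in D}(y\cdot x)=y\cdot\sup D$), and has a top element $\top\ge u$ for all $u\in U$. For a family $(u_i)_{i\in I}$, $\sum_{i\in I}u_i$ is the supremum of all finite sums over finite subsets of $I$. For a set $X$, $\mathcal W(X)$ is the set of maps $m:X\to U$ whose support $\mathrm{supp}(m)=\{x: m(x)\ne\mathbf 0\}$ is countable and whose mass $|m|=\sum_{x\in\mathrm{supp}(m)}m(x)$ is defined. Operations on $\mathcal W(X)$ are pointwise ($m_1+m_2$,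 $u\cdot m$, $m\cdot u$, $\mathbf 0$), and $m_1\sqsubseteq m_2$ iff $m_1+m=m_2$ for some $m$. Let $\eta(x)(y)=\mathbf 1$ if $x=y$ and $\mathbf 0$ otherwise, and for $f:X\to\mathcal W(Y)$ let $f^\dagger(m)(y)=\sum_{x\in\mathrm{supp}(m)}m(x)\cdot f(x)(y)$. Programs. Fix a set $\Sigma$ of states, a set $\mathsf{Act}$ of atomic actions with interpretation $[\![a]\!]_{\mathsf{Act}}:\Sigma\to\mathcal W(\Sigma)$, and $\mathsf{Test}\subseteq 2^\Sigma$. Programs are $C::=\mathsf{skip}\mid C_1;C_2\mid C_1+C_2\mid\mathsf{assume}\ e\mid C^{\langle e,e'\rangle}\mid a$ with $a\in\mathsf{Act}$; expressions $e::=b\mid u$ with $u\in U$; tests $b::=\mathsf{true}\mid\mathsf{false}\mid b_1\vee b_2\mid b_1\wedge b_2\mid\neg b\mid t$ with $t\in\mathsf{Test}$. Tests evaluate to $[\![b]\!](\sigma)\in\{\mathbf 0,\mathbf 1\}$ by Boolean evaluation ($\mathbf 1$ = true) with $[\![t]\!](\sigma)=\mathbf 1$ iff $\sigma\in t$; $[\![u]\!](\sigma)=u$. Semantics: $[\![\mathsf{skip}]\!](\sigma)=\eta(\sigma)$; $[\![C_1;C_2]\!](\sigma)=[\![C_2]\!]^\dagger([\![C_1]\!](\sigma))$; $[\![C_1+C_2]\!](\sigma)=[\![C_1]\!](\sigma)+[\![C_2]\!](\sigma)$; $[\![a]\!]=[\![a]\!]_{\mathsf{Act}}$; $[\![\mathsf{assume}\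 e]\!](\sigma)=[\![e]\!](\sigma)\cdot\eta(\sigma)$; $[\![C^{\langle e,e'\rangle}]\!]$ is the least fixed point (pointwise order on functions $\Sigma\to\mathcal W(\Sigma)$) of $\Phi(f)(\sigma)=[\![e]\!](\sigma)\cdot f^\dagger([\![C]\!](\sigma))+[\![e']\!](\sigma)\cdot\eta(\sigma)$. A program is well-formed if its semantics is a total function. Assertions and triples. Assertions are subsets of $\mathcal W(\Sigma)$. For $\phi:T\to 2^{\mathcal W(\Sigma)}$, $\bigoplus_{x\in T}\phi(x)=\{\sum_{t\in T}m_t : m_t\in\phi(t)\ \forall t\in T\}$, $\varphi\oplus\psi$ is the case $T=\{1,2\}$, $u\odot\varphi=\{u\cdot m:m\in\varphi\}$, $\varphi\odot u=\{m\cdot u:m\in\varphi\}$. $\vDash\{\varphi\}\ C\ \{\psi\}$ iff $[\![C]\!]^\dagger(m)\in\psi$ for all $m\in\varphi$. Proof system. $\Gamma\vdash\{\varphi\}C\{\psi\}$ means derivable using the triples in $\Gamma$ as axioms and the rules: (Skip) $\{\varphi\}\mathsf{skip}\{\varphi\}$. (Seq) from $\{\varphi\}C_1\{\vartheta\}$, $\{\vartheta\}C_2\{\psi\}$ infer $\{\varphi\}C_1;C_2\{\psi\}$. (Plus) from $\{\varphi\}C_1\{\psi_1\}$, $\{\varphi\}C_2\{\psi_2\}$ infer $\{\varphi\}C_1+C_2\{\psi_1\oplus\psi_2\}$. (Assume) if $[\![e]\!](\sigma)=u$ for all $m\in\varphi$, $\sigma\in\mathrm{supp}(m)$, then $\{\varphi\}\mathsf{assume}\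 e\{\varphi\odot u\}$. (Iter) if $(\psi_n)_{n\in\mathbb N}$ converges to $\psi_\infty$ (whenever $m_n\in\psi_n$ for all $n$, $\sum_n m_n\in\psi_\infty$) and for all $n$, $\{\varphi_n\}\mathsf{assume}\ e;C\{\varphi_{n+1}\}$ and $\{\varphi_n\}\mathsf{assume}\ e'\{\psi_n\}$, then $\{\varphi_0\}C^{\langle e,e'\rangle}\{\psi_\infty\}$. (False) $\{\emptyset\}C\{\varphi\}$. (True) $\{\varphi\}C\{\mathcal W(\Sigma)\}$. (Scale) from $\{\varphi\}C\{\psi\}$ infer $\{u\odot\varphi\}C\{u\odot\psi\}$. (Disj)/(Conj) from $\{\varphi_i\}C\{\psi_i\}$, $i=1,2$, infer $\{\varphi_1\cup\varphi_2\}C\{\psi_1\cup\psi_2\}$, resp. $\{\varphi_1\cap\varphi_2\}C\{\psi_1\cap\psi_2\}$. (Choice) from $\{\phi(t)\}C\{\phi'(t)\}$ for all $t\in T$ infer $\{\bigoplus_{x\in T}\phi(x)\}C\{\bigoplus_{x\in T}\phi'(x)\}$. (Exists) from the same infer $\{\bigcup_t\phi(t)\}C\{\bigcup_t\phi'(t)\}$. (Consequence) from $\varphi'\subseteq\varphi$, $\{\varphi\}C\{\psi\}$, $\psi\subseteq\psi'$ infer $\{\varphi'\}C\{\psi'\}$. *)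

From Stdlib Require Import List ClassicalEpsilon.
Import ListNotations.
Set Implicit Arguments.

Definition obind {T S : Type} (o : option T) (f : T -> option S) : option S :=
  match o with Some x => f x | None => None end.

Record PSR := {
  car :> Type;
  padd : car -> car -> option car;
  pmul : car -> car -> car;
  zero : car;
  one : car;
  padd_comm : forall u v, padd u v = padd v u;
  padd_assoc : forall u v w,
      obind (padd u v) (fun x => padd x w) = obind (padd v w) (fun y => padd u y);
  padd_0 : forall u, padd u zero = Some u;
  pmul_assoc : forall u v w, pmul u (pmul v w) = pmul (pmul u v) w;
  pmul_1l : forall u, pmul one u = u;
  pmul_1r : forall u, pmul u one = u;
  pmul_addl : forall u v w s, padd v w = Some s ->
      padd (pmul u v) (pmul u w) = Some (pmul u s);
  pmul_addr : forall u v w s, padd v w = Some s ->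
      padd (pmul v u) (pmul w u) = Some (pmul s u);
  pmul_0l : forall u, pmul zero u = zero;
  pmul_0r : forall u, pmul u zero = zero
}.

Section Semiring.
Variable A : PSR.

Definition nle (u v : A) : Prop := exists w, padd A u w = Some v.

Definition naturally_ordered : Prop :=
  (forall u, nle u u) /\
  (forall u v w, nle u v -> nle v w -> nle u w) /\
  (forall u v, nle u v -> nle v u -> u = v).

Definition is_lub (D : A -> Prop) (s : A) : Prop :=
  (forall x, D x -> nle x s) /\ (forall b, (forall x, D x -> nle x b) -> nle s b).

Definition directed (D : A -> Prop) : Prop :=
  (exists x, D x) /\
  (forall x y, D x -> D y -> exists z, D z /\ nle x z /\ nle y z).

Definition scott_continuous : Prop :=
  (forall D, directed D -> exists s, is_lub D s) /\
  (forall D y s, directed D -> is_lub D s ->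
     (forall x, D x -> exists v, padd A x y = Some v) ->
     exists t, padd A s y = Some t /\
       is_lub (fun z => exists x, D x /\ padd A x y = Some z) t) /\
  (forall D y s, directed D -> is_lub D s ->
     is_lub (fun z => exists x, D x /\ z = pmul A x y) (pmul A s y)) /\
  (forall D y s, directed D -> is_lub D s ->
     is_lub (fun z => exists x, D x /\ z = pmul A y x) (pmul A y s)).

Definition has_top : Prop := exists top : A, forall u, nle u top.

Definition fsum {I : Type} (u : I -> A) (l : list I) : option A :=
  fold_right (fun i acc => obind acc (fun a => padd A (u i) a)) (Some (zero A)) l.

(* sum_{i in I} u_i is defined and equals s: every finite sub-sum is defined and
   s is the supremum of the finite sub-sums *)
Definition Sum {I : Type} (u : I -> A) (s : A) : Prop :=
  (forall l, NoDup l -> exists v, fsum u l = Some v) /\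
  is_lub (fun v => exists l, NoDup l /\ fsum u l = Some v) s.

Definition supp {X : Type} (m : X -> A) : Type := { x : X | m x <> zero A }.

Definition isW {X : Type} (m : X -> A) : Prop :=
  (exists f : supp m -> nat, forall a b, f a = f b -> a = b) /\
  (exists s, Sum (fun x : supp m => m (proj1_sig x)) s).

Definition eta {X : Type} (x : X) : X -> A :=
  fun y => if excluded_middle_informative (x = y) then one A else zero A.

Definition wle {X : Type} (m1 m2 : X -> A) : Prop :=
  exists m, isW m /\ forall x, padd A (m1 x) (m x) = Some (m2 x).

Definition WAdd {X : Type} (m1 m2 r : X -> A) : Prop :=
  isW r /\ forall x, padd A (m1 x) (m2 x) = Some (r x).

Definition BindF {X Y : Type} (f : X -> Y -> A) (m : X -> A) (r : Y -> A) : Prop :=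
  isW r /\
  forall y, Sum (fun x : supp m => pmul A (m (proj1_sig x)) (f (proj1_sig x) y)) (r y).

Definition WSum {X T : Type} (ms : T -> X -> A) (r : X -> A) : Prop :=
  isW r /\ forall x, Sum (fun t => ms t x) (r x).

End Semiring.

Arguments nle {A}. Arguments is_lub {A}. Arguments directed {A}.
Arguments fsum {A I}. Arguments Sum {A I}. Arguments supp {A X}.
Arguments isW {A X}. Arguments eta {A X}. Arguments wle {A X}.
Arguments WAdd {A X}. Arguments BindF {A X Y}. Arguments WSum {A X T}.

Section Programs.
Variable A : PSR.
Variable Sigma : Type.
Variable Act : Type.
Variable actI : Act -> Sigma -> Sigma -> A.
Variable TestI : Type.
Variable testI : TestI -> Sigma -> Prop.        (* Test = { testI t | t : TestI } *)

Inductive test : Type :=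
| TTrue | TFalse
| TOr (b1 b2 : test) | TAnd (b1 b2 : test) | TNot (b : test)
| TAtom (t : TestI).

Inductive expr : Type :=
| EB (b : test)
| EU (u : A).

Inductive prog : Type :=
| Skip
| Seq (C1 C2 : prog)
| Plus (C1 C2 : prog)
| Assume (e : expr)
| Iter (C : prog) (e e' : expr)
| Atom (a : Act).

Fixpoint teval (b : test) (s : Sigma) : Prop :=
  match b with
  | TTrue => True
  | TFalse => False
  | TOr b1 b2 => teval b1 s \/ teval b2 s
  | TAnd b1 b2 => teval b1 s /\ teval b2 s
  | TNot b => ~ teval b s
  | TAtom t => testI t s
  end.

Definition eval (e : expr) (s : Sigma) : A :=
  match e with
  | EB b => if excluded_middle_informative (teval b s) then one A else zero A
  | EU u => u
  end.

Definition PhiRel (dC : Sigma -> (Sigma -> A) -> Prop) (e e' : expr)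
    (F : Sigma -> Sigma -> A) (s : Sigma) (r : Sigma -> A) : Prop :=
  exists mc b, dC s mc /\ BindF F mc b /\
    WAdd (fun y => pmul A (eval e s) (b y))
         (fun y => pmul A (eval e' s) (eta s y)) r.

Definition IsLfp (dC : Sigma -> (Sigma -> A) -> Prop) (e e' : expr)
    (F : Sigma -> Sigma -> A) : Prop :=
  (forall s, isW (F s)) /\ (forall s, PhiRel dC e e' F s (F s)) /\
  (forall G : Sigma -> Sigma -> A,
      (forall s, isW (G s)) -> (forall s, PhiRel dC e e' G s (G s)) ->
      forall s, wle (F s) (G s)).

(* den C s m  :  [[C]](s) is defined and equals m *)
Fixpoint den (C : prog) : Sigma -> (Sigma -> A) -> Prop :=
  match C with
  | Skip => fun s m => m = eta s
  | Seq C1 C2 => fun s m =>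
      exists m1 g, den C1 s m1 /\
        (forall x, m1 x <> zero A -> den C2 x (g x)) /\ BindF g m1 m
  | Plus C1 C2 => fun s m =>
      exists m1 m2, den C1 s m1 /\ den C2 s m2 /\ WAdd m1 m2 m
  | Assume e => fun s m => m = (fun y => pmul A (eval e s) (eta s y))
  | Iter C e e' => fun s m => exists F, IsLfp (den C) e e' F /\ F s = m
  | Atom a => fun s m => m = actI a s
  end.

Definition well_formed (C : prog) : Prop :=
  forall s, exists m, den C s m /\ isW m.

Definition asrt := (Sigma -> A) -> Prop.

Definition SubW (p : asrt) : Prop := forall m, p m -> isW m.

Definition valid (phi : asrt) (C : prog) (psi : asrt) : Prop :=
  forall m, phi m ->
    exists g r, (forall x, m x <> zero A -> den C x (g x)) /\ BindF g m r /\ psi r.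

Definition bigoplus (T : Type) (P : T -> asrt) : asrt :=
  fun m => exists ms : T -> Sigma -> A, (forall t, P t (ms t)) /\ WSum ms m.

Definition oplus (p q : asrt) : asrt :=
  bigoplus (fun b : bool => if b then p else q).

Definition scaleL (u : A) (p : asrt) : asrt :=
  fun m => exists m0, p m0 /\ m = (fun s => pmul A u (m0 s)).

Definition scaleR (p : asrt) (u : A) : asrt :=
  fun m => exists m0, p m0 /\ m = (fun s => pmul A (m0 s) u).

Definition converges (ps : nat -> asrt) (pinf : asrt) : Prop :=
  forall ms : nat -> Sigma -> A, (forall n, ps n (ms n)) ->
    exists r, WSum ms r /\ pinf r.

Definition triples := asrt -> prog -> asrt -> Prop.

(* Gamma |- {phi} C {psi}.  Every derived triple has assertions that are subsets
   of W(Sigma) (side conditions on each rule's conclusion). *)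
Inductive derives (Gamma : triples) : asrt -> prog -> asrt -> Prop :=
| R_Ax : forall phi C psi, Gamma phi C psi -> SubW phi -> SubW psi ->
    derives Gamma phi C psi
| R_Skip : forall phi, SubW phi -> derives Gamma phi Skip phi
| R_Seq : forall phi th psi C1 C2, SubW phi -> SubW psi ->
    derives Gamma phi C1 th -> derives Gamma th C2 psi ->
    derives Gamma phi (Seq C1 C2) psi
| R_Plus : forall phi psi1 psi2 C1 C2, SubW phi -> SubW (oplus psi1 psi2) ->
    derives Gamma phi C1 psi1 -> derives Gamma phi C2 psi2 ->
    derives Gamma phi (Plus C1 C2) (oplus psi1 psi2)
| R_Assume : forall phi e u, SubW phi -> SubW (scaleR phi u) ->
    (forall m s, phi m -> m s <> zero A -> eval e s = u) ->
    derives Gamma phi (Assume e) (scaleR phi u)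
| R_Iter : forall (phis psis : nat -> asrt) psiinf C e e',
    SubW (phis 0) -> SubW psiinf ->
    converges psis psiinf ->
    (forall n, derives Gamma (phis n) (Seq (Assume e) C) (phis (S n))) ->
    (forall n, derives Gamma (phis n) (Assume e') (psis n)) ->
    derives Gamma (phis 0) (Iter C e e') psiinf
| R_False : forall C phi, SubW phi -> derives Gamma (fun _ => False) C phi
| R_True : forall phi C, SubW phi -> derives Gamma phi C (fun m => isW m)
| R_Scale : forall phi C psi u, SubW (scaleL u phi) -> SubW (scaleL u psi) ->
    derives Gamma phi C psi -> derives Gamma (scaleL u phi) C (scaleL u psi)
| R_Disj : forall phi1 phi2 psi1 psi2 C,
    SubW (fun m => phi1 m \/ phi2 m) -> SubW (fun m => psi1 m \/ psi2 m) ->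
    derives Gamma phi1 C psi1 -> derives Gamma phi2 C psi2 ->
    derives Gamma (fun m => phi1 m \/ phi2 m) C (fun m => psi1 m \/ psi2 m)
| R_Conj : forall phi1 phi2 psi1 psi2 C,
    SubW (fun m => phi1 m /\ phi2 m) -> SubW (fun m => psi1 m /\ psi2 m) ->
    derives Gamma phi1 C psi1 -> derives Gamma phi2 C psi2 ->
    derives Gamma (fun m => phi1 m /\ phi2 m) C (fun m => psi1 m /\ psi2 m)
| R_Choice : forall (T : Type) (P P' : T -> asrt) C,
    SubW (bigoplus P) -> SubW (bigoplus P') ->
    (forall t, derives Gamma (P t) C (P' t)) ->
    derives Gamma (bigoplus P) C (bigoplus P')
| R_Exists : forall (T : Type) (P P' : T -> asrt) C,
    SubW (fun m => exists t, P t m) -> SubW (fun m => exists t, P' t m) ->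
    (forall t, derives Gamma (P t) C (P' t)) ->
    derives Gamma (fun m => exists t, P t m) C (fun m => exists t, P' t m)
| R_Conseq : forall phi phi' psi psi' C, SubW phi' -> SubW psi' ->
    (forall m, phi' m -> phi m) -> derives Gamma phi C psi ->
    (forall m, psi m -> psi' m) ->
    derives Gamma phi' C psi'.

Definition Omega : triples :=
  fun phi C psi => SubW phi /\ SubW psi /\ (exists a, C = Atom a) /\ valid phi C psi.

End Programs.

(* Completeness reduces to point masses.  A weighting m is the sum over its support of
   m(s)·η(s), so the Choice and Scale rules turn derivations of {η(s)} C {[[C]](s)} into
   one of {m} C {[[C]]†(m)}, and Exists and Consequence then give every valid triple.

   For a loop C^⟨e,e'⟩ the Iter rule is
   instantiated with φ_n = {the weighting reached from η(s) after n rounds of assume e; C}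
   and ψ_n = {its exit under assume e'}.  Exchanging the order of summation (Fubini for
   sums in a Scott-continuous semiring) shows that the partial sums of the ψ_n are exactly
   the Kleene iterates Φ^k(0)(s); by Scott continuity their supremum is the least fixed
   point, so the ψ_n converge to [[C^⟨e,e'⟩]](s). *)

From Stdlib Require Import List ClassicalEpsilon ProofIrrelevance FunctionalExtensionality
  Permutation Lia.
Import ListNotations.
Set Implicit Arguments.
Unset Strict Implicit.

Section Completeness.

Variable A : PSR.
Hypothesis A_ordered : naturally_ordered A.
Hypothesis A_scott : scott_continuous A.

Local Notation z0 := (zero A).
Local Notation add := (padd A).
Local Notation mul := (pmul A).

Section Algebra.

Implicit Types u v w a b c p q r s t : A.

Lemma padd_0l u : add z0 u = Some u.
Proof. rewrite padd_comm; apply padd_0. Qed.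

Lemma nle_refl u : nle u u.
Proof. apply A_ordered. Qed.

Lemma nle_trans u v w : nle u v -> nle v w -> nle u w.
Proof. apply A_ordered. Qed.

Lemma nle_antisym u v : nle u v -> nle v u -> u = v.
Proof. apply A_ordered. Qed.

Lemma nle0 u : nle z0 u.
Proof. exists u; apply padd_0l. Qed.

Lemma nle_addr u v w : add u v = Some w -> nle u w.
Proof. exists v; auto. Qed.

Lemma nle_addl u v w : add u v = Some w -> nle v w.
Proof. exists u; rewrite padd_comm; auto. Qed.

Lemma nle0_eq u : nle u z0 -> u = z0.
Proof. intros H; apply nle_antisym; auto using nle0. Qed.

Lemma padd_assoc_lr u v w x r :
  add u v = Some x -> add x w = Some r -> exists y, add v w = Some y /\ add u y = Some r.
Proof.
  intros H1 H2. pose proof (padd_assoc A u v w) as H.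
  rewrite H1 in H; simpl in H. rewrite H2 in H.
  destruct (add v w) as [y|]; simpl in H; [eauto | discriminate].
Qed.

Lemma padd_assoc_rl u v w y r :
  add v w = Some y -> add u y = Some r -> exists x, add u v = Some x /\ add x w = Some r.
Proof.
  intros H1 H2. pose proof (padd_assoc A u v w) as H.
  rewrite H1 in H; simpl in H. rewrite H2 in H.
  destruct (add u v) as [x|]; simpl in H; [eauto | discriminate].
Qed.

Lemma padd_interchange x y z w p q r :
  add x y = Some p -> add z w = Some q -> add p q = Some r ->
  exists p' q', add x z = Some p' /\ add y w = Some q' /\ add p' q' = Some r.
Proof.
  intros Hp Hq Hr.
  destruct (padd_assoc_lr Hp Hr) as [t [Ht Hxt]].
  destruct (padd_assoc_rl Hq Ht) as [yz [Hyz Hyzw]].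
  rewrite padd_comm in Hyz.
  destruct (padd_assoc_lr Hyz Hyzw) as [q' [Hq' Hzq']].
  destruct (padd_assoc_rl Hzq' Hxt) as [p' [Hp' Hp'q']].
  exists p', q'; auto.
Qed.

Lemma padd_below u u' v v' w' :
  nle u u' -> nle v v' -> add u' v' = Some w' -> exists w, add u v = Some w /\ nle w w'.
Proof.
  intros [a Ha] [b Hb] H.
  destruct (padd_interchange Ha Hb H) as [p [q [Hp [Hq Hpq]]]].
  exists p; split; [auto | exists q; auto].
Qed.

Lemma padd_mono u u' v v' w w' :
  nle u u' -> nle v v' -> add u v = Some w -> add u' v' = Some w' -> nle w w'.
Proof.
  intros Hu Hv H H'. destruct (padd_below Hu Hv H') as [w0 [H0 Hle]].
  rewrite H in H0; injection H0 as ->; auto.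
Qed.

Lemma pmul_monol c u v : nle u v -> nle (mul c u) (mul c v).
Proof. intros [w Hw]; exists (mul c w); apply pmul_addl; auto. Qed.

Lemma is_lub_unique (P : A -> Prop) s t : is_lub P s -> is_lub P t -> s = t.
Proof. intros [H1 H2] [H3 H4]; apply nle_antisym; auto. Qed.

Lemma is_lub_ext (P Q : A -> Prop) s : (forall z, P z <-> Q z) -> is_lub P s -> is_lub Q s.
Proof.
  intros HPQ [Hub Hleast]; split.
  - intros x Hx; apply Hub, HPQ, Hx.
  - intros b Hb; apply Hleast; intros x Hx; apply Hb, HPQ, Hx.
Qed.

Lemma is_lub_cofinal (P Q : A -> Prop) s :
  (forall z, P z -> exists z', Q z' /\ nle z z') ->
  (forall z, Q z -> exists z', P z' /\ nle z z') ->
  is_lub P s -> is_lub Q s.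
Proof.
  intros HPQ HQP [Hub Hleast]; split.
  - intros z Hz; destruct (HQP z Hz) as [z' [Hz' Hle]]; eauto using nle_trans.
  - intros b Hb; apply Hleast; intros z Hz.
    destruct (HPQ z Hz) as [z' [Hz' Hle]]; eauto using nle_trans.
Qed.

(** * Finite and infinite sums *)

Section FiniteSums.

Variable I : Type.
Implicit Types (f g h : I -> A) (l : list I).

Lemma fsum_app_inv f l1 l2 c :
  fsum f (l1 ++ l2) = Some c ->
  exists a b, fsum f l1 = Some a /\ fsum f l2 = Some b /\ add a b = Some c.
Proof.
  revert c; induction l1 as [|i l1 IH]; intros c H.
  - exists z0, c; auto using padd_0l.
  - simpl in H. destruct (fsum f (l1 ++ l2)) as [c'|] eqn:E; simpl in H; [|discriminate].
    destruct (IH _ eq_refl) as [a [b [Ha [Hb Hab]]]].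
    destruct (padd_assoc_rl Hab H) as [x [Hx Hxb]].
    exists x, b; simpl; rewrite Ha; auto.
Qed.

Lemma fsum_perm f l l' : Permutation l l' -> fsum f l = fsum f l'.
Proof.
  induction 1 as [| i l l' _ IH | i j l | l l' l'' _ IH1 _ IH2]; simpl.
  - reflexivity.
  - rewrite IH; reflexivity.
  - destruct (fsum f l) as [a|]; simpl; auto.
    pose proof (padd_assoc A (f i) (f j) a) as Hij.
    pose proof (padd_assoc A (f j) (f i) a) as Hji.
    rewrite padd_comm in Hji. rewrite Hji in Hij.
    destruct (add (f i) a), (add (f j) a); simpl in *; auto.
  - congruence.
Qed.

Lemma incl_NoDup_Permutation_app l1 l2 :
  NoDup l1 -> incl l1 l2 -> exists l3, Permutation l2 (l1 ++ l3).
Proof.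
  revert l2; induction l1 as [|i l1 IH]; intros l2 Hnd Hincl.
  - exists l2; auto.
  - inversion Hnd as [|? ? Hi Hnd1]; subst.
    destruct (in_split i l2) as [p [q ->]]; [apply Hincl; left; auto|].
    destruct (IH (p ++ q) Hnd1) as [l3 Hl3].
    + intros x Hx. assert (Hpq : In x (p ++ i :: q)) by (apply Hincl; right; auto).
      apply in_app_or in Hpq; apply in_or_app.
      destruct Hpq as [Hpq|[->|Hpq]]; auto; contradiction.
    + exists l3. simpl. eapply perm_trans; [apply Permutation_sym, Permutation_middle|]; auto.
Qed.

Lemma fsum_incl f l1 l2 b :
  NoDup l1 -> incl l1 l2 -> fsum f l2 = Some b -> exists a, fsum f l1 = Some a /\ nle a b.
Proof.
  intros Hnd Hincl H.
  destruct (incl_NoDup_Permutation_app Hnd Hincl) as [l3 Hperm].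
  rewrite (fsum_perm f Hperm) in H.
  destruct (fsum_app_inv H) as [a [c [Ha [_ Hac]]]].
  exists a; split; [auto | exists c; auto].
Qed.

Lemma fsum_below f g l b :
  (forall i, nle (f i) (g i)) -> fsum g l = Some b -> exists a, fsum f l = Some a /\ nle a b.
Proof.
  intros Hle; revert b; induction l as [|i l IH]; intros b H; simpl in *.
  - injection H as <-; exists z0; auto using nle_refl.
  - destruct (fsum g l) as [b'|]; simpl in H; [|discriminate].
    destruct (IH _ eq_refl) as [a' [-> Hle']].
    destruct (padd_below (Hle i) Hle' H) as [w [Hw Hwb]].
    exists w; auto.
Qed.

Lemma fsum_padd f g h l c :
  (forall i, add (f i) (g i) = Some (h i)) ->
  fsum h l = Some c <-> exists a b, fsum f l = Some a /\ fsum g l = Some b /\ add a b = Some c.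
Proof.
  intros Hfg; revert c; induction l as [|i l IH]; intros c; simpl; split.
  - intros [= <-]. exists z0, z0; auto using padd_0.
  - intros [a [b [[= <-] [[= <-] H]]]]. rewrite padd_0 in H; auto.
  - intros H. destruct (fsum h l) as [c'|]; simpl in H; [|discriminate].
    destruct (proj1 (IH c') eq_refl) as [a [b [-> [-> Hab]]]].
    destruct (padd_interchange (Hfg i) Hab H) as [p [q [Hp [Hq Hpq]]]].
    exists p, q; auto.
  - intros [a [b [Ha [Hb Hab]]]].
    destruct (fsum f l) as [a'|]; simpl in Ha; [|discriminate].
    destruct (fsum g l) as [b'|]; simpl in Hb; [|discriminate].
    destruct (padd_interchange Ha Hb Hab) as [p [q [Hp [Hq Hpq]]]].
    rewrite (Hfg i) in Hp; injection Hp as <-.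
    rewrite (proj2 (IH q) (ex_intro _ a' (ex_intro _ b' (conj eq_refl (conj eq_refl Hq))))).
    auto.
Qed.

Lemma fsum_mull f l c a : fsum f l = Some a -> fsum (fun i => mul c (f i)) l = Some (mul c a).
Proof.
  revert a; induction l as [|i l IH]; intros a H; simpl in *.
  - injection H as <-; rewrite pmul_0r; auto.
  - destruct (fsum f l) as [a'|]; simpl in H; [|discriminate].
    rewrite (IH a' eq_refl); simpl; apply pmul_addl; auto.
Qed.

Lemma fsum_mulr f l c a : fsum f l = Some a -> fsum (fun i => mul (f i) c) l = Some (mul a c).
Proof.
  revert a; induction l as [|i l IH]; intros a H; simpl in *.
  - injection H as <-; rewrite pmul_0l; auto.
  - destruct (fsum f l) as [a'|]; simpl in H; [|discriminate].
    rewrite (IH a' eq_refl); simpl; apply pmul_addr; auto.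
Qed.

Lemma fsum_zero f l : (forall i, In i l -> f i = z0) -> fsum f l = Some z0.
Proof.
  induction l as [|i l IH]; intros H; simpl; auto.
  rewrite IH by (intros; apply H; right; auto); simpl.
  rewrite H by (left; auto). apply padd_0.
Qed.

Lemma fsum_single f i0 l :
  NoDup l -> (forall i, i <> i0 -> f i = z0) -> fsum f l = Some z0 \/ fsum f l = Some (f i0).
Proof.
  intros Hnd Hf; induction Hnd as [|i l Hi _ IH]; simpl; auto.
  destruct (excluded_middle_informative (i = i0)) as [->|Hne].
  - rewrite fsum_zero by (intros j Hj; apply Hf; intros ->; contradiction).
    simpl; rewrite padd_0; auto.
  - rewrite (Hf i Hne). destruct IH as [-> | ->]; simpl; rewrite padd_0l; auto.
Qed.

Lemma fsum_map (J : Type) (k : J -> I) f (l : list J) :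
  fsum f (map k l) = fsum (fun j => f (k j)) l.
Proof. induction l as [|j l IH]; simpl; [|rewrite IH]; reflexivity. Qed.

Definition nonzerob f (i : I) : bool :=
  if excluded_middle_informative (f i = z0) then false else true.

Lemma fsum_filter_nonzero f l : fsum f l = fsum f (filter (nonzerob f) l).
Proof.
  induction l as [|i l IH]; simpl; auto.
  unfold nonzerob at 1; destruct (excluded_middle_informative (f i = z0)) as [E|E]; simpl.
  - rewrite <- IH, E. destruct (fsum f l); simpl; rewrite ?padd_0l; auto.
  - rewrite IH; auto.
Qed.

(* [fsum] with the junk value [z0] when the finite sum is undefined. *)
Definition fsum0 f l : A := match fsum f l with Some v => v | None => z0 end.

Lemma fsum0_eq f l a : fsum f l = Some a -> fsum0 f l = a.
Proof. unfold fsum0; intros ->; auto. Qed.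

End FiniteSums.

Lemma NoDup_merge (I : Type) (l1 l2 : list I) : exists l, NoDup l /\ incl l1 l /\ incl l2 l.
Proof.
  exists (nodup (fun x y => excluded_middle_informative (x = y)) (l1 ++ l2)); repeat split.
  - apply NoDup_nodup.
  - intros x Hx; apply nodup_In, in_or_app; auto.
  - intros x Hx; apply nodup_In, in_or_app; auto.
Qed.

Definition partial_sums (I : Type) (f : I -> A) (v : A) : Prop :=
  exists l, NoDup l /\ fsum f l = Some v.

Definition fsum_total (I : Type) (f : I -> A) : Prop :=
  forall l, NoDup l -> exists v, fsum f l = Some v.

Section Sums.

Variable I : Type.
Implicit Types (f g h : I -> A) (l : list I).

Lemma Sum_unique f s t : Sum f s -> Sum f t -> s = t.
Proof. intros [_ Hs] [_ Ht]; eapply is_lub_unique; eauto. Qed.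

Lemma Sum_ext f g s : (forall i, f i = g i) -> Sum f s -> Sum g s.
Proof. intros H; replace g with f; auto. apply functional_extensionality; auto. Qed.

Lemma fsum_le_Sum f s l v : Sum f s -> NoDup l -> fsum f l = Some v -> nle v s.
Proof. intros [_ [Hub _]] Hnd Hv. apply Hub; exists l; auto. Qed.

Lemma term_le_Sum f s i : Sum f s -> nle (f i) s.
Proof.
  intros Hs. apply (fsum_le_Sum (l := [i])) with (1 := Hs).
  - repeat constructor; auto.
  - simpl; rewrite padd_0; auto.
Qed.

Lemma partial_sums_directed f : fsum_total f -> directed (partial_sums f).
Proof.
  intros Htot; split.
  - exists z0, []; split; [constructor | auto].
  - intros x y [l1 [Hnd1 Hx]] [l2 [Hnd2 Hy]].
    destruct (NoDup_merge l1 l2) as [l [Hnd [Hincl1 Hincl2]]].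
    destruct (Htot l Hnd) as [v Hv].
    exists v; split; [exists l; auto|].
    destruct (fsum_incl Hnd1 Hincl1 Hv) as [a [Ha Hav]].
    destruct (fsum_incl Hnd2 Hincl2 Hv) as [b [Hb Hbv]].
    rewrite Hx in Ha; rewrite Hy in Hb; injection Ha as ->; injection Hb as ->; auto.
Qed.

Lemma Sum_exists f : fsum_total f -> exists s, Sum f s.
Proof.
  intros Htot. destruct (proj1 A_scott _ (partial_sums_directed Htot)) as [s Hs].
  exists s; split; auto.
Qed.

Lemma Sum_below f g t : (forall i, nle (f i) (g i)) -> Sum g t -> exists s, Sum f s /\ nle s t.
Proof.
  intros Hle [Htot [Hub _]].
  assert (Htotf : fsum_total f).
  { intros l Hnd. destruct (Htot l Hnd) as [v Hv].
    destruct (fsum_below Hle Hv) as [a [Ha _]]; eauto. }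
  destruct (Sum_exists Htotf) as [s Hs]. exists s; split; auto.
  apply (proj2 (proj2 Hs)). intros x [l [Hnd Hx]].
  destruct (Htot l Hnd) as [v Hv]. destruct (fsum_below Hle Hv) as [a [Ha Hav]].
  rewrite Hx in Ha; injection Ha as ->.
  eapply nle_trans; [apply Hav | apply Hub; exists l; auto].
Qed.

Lemma Sum_mono f g s t : (forall i, nle (f i) (g i)) -> Sum f s -> Sum g t -> nle s t.
Proof.
  intros Hle Hf Hg. destruct (Sum_below Hle Hg) as [s' [Hs' Hle']].
  rewrite (Sum_unique Hf Hs'); auto.
Qed.

Lemma Sum_single f i0 : (forall i, i <> i0 -> f i = z0) -> Sum f (f i0).
Proof.
  intros Hf. split; [|split].
  - intros l Hnd. destruct (fsum_single Hnd Hf) as [H|H]; eauto.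
  - intros x [l [Hnd Hx]].
    destruct (fsum_single Hnd Hf) as [H|H]; rewrite Hx in H; injection H as ->;
      auto using nle0, nle_refl.
  - intros b Hb. apply Hb. exists [i0]; split; [repeat constructor; auto|].
    simpl; rewrite padd_0; auto.
Qed.

Lemma Sum_zero f : (forall i, f i = z0) -> Sum f z0.
Proof.
  intros Hf. assert (H : forall l, fsum f l = Some z0) by (intros; apply fsum_zero; auto).
  split; [|split].
  - intros l _; eauto.
  - intros x [l [_ Hx]]. rewrite H in Hx; injection Hx as <-; apply nle_refl.
  - intros b _; apply nle0.
Qed.

Lemma Sum_mull f s c : Sum f s -> Sum (fun i => mul c (f i)) (mul c s).
Proof.
  intros [Htot Hs]. split.
  - intros l Hnd. destruct (Htot l Hnd) as [v Hv]. eexists; apply fsum_mull, Hv.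
  - eapply is_lub_ext;
      [|apply (proj2 (proj2 (proj2 A_scott)) _ c s (partial_sums_directed Htot) Hs)].
    intros z; split.
    + intros [x [[l [Hnd Hx]] ->]]. exists l; split; auto. apply fsum_mull; auto.
    + intros [l [Hnd Hz]]. destruct (Htot l Hnd) as [v Hv].
      exists v; split; [exists l; auto|].
      rewrite (fsum_mull c Hv) in Hz; injection Hz; auto.
Qed.

Lemma Sum_mulr f s c : Sum f s -> Sum (fun i => mul (f i) c) (mul s c).
Proof.
  intros [Htot Hs]. split.
  - intros l Hnd. destruct (Htot l Hnd) as [v Hv]. eexists; apply fsum_mulr, Hv.
  - eapply is_lub_ext;
      [|apply (proj1 (proj2 (proj2 A_scott)) _ c s (partial_sums_directed Htot) Hs)].
    intros z; split.
    + intros [x [[l [Hnd Hx]] ->]]. exists l; split; auto. apply fsum_mulr; auto.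
    + intros [l [Hnd Hz]]. destruct (Htot l Hnd) as [v Hv].
      exists v; split; [exists l; auto|].
      rewrite (fsum_mulr c Hv) in Hz; injection Hz; auto.
Qed.

End Sums.

Lemma Sum_reindex (I J : Type) (k : J -> I) (f : I -> A) s :
  (forall j j', k j = k j' -> j = j') -> (forall i, f i <> z0 -> exists j, k j = i) ->
  Sum (fun j => f (k j)) s <-> Sum f s.
Proof.
  intros Hinj Hsurj.
  assert (Hlift : forall l, (forall i, In i l -> f i <> z0) -> exists l', map k l' = l).
  { induction l as [|i l IH]; intros Hl; [exists []; auto|].
    destruct IH as [l' <-]; [intros; apply Hl; right; auto|].
    destruct (Hsurj i) as [j <-]; [apply Hl; left; auto|].
    exists (j :: l'); auto. }
  assert (Hpull : forall l, NoDup l ->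
            exists l', NoDup l' /\ fsum f l = fsum (fun j => f (k j)) l').
  { intros l Hnd. destruct (Hlift (filter (nonzerob f) l)) as [l' Hl'].
    - intros i Hi. apply filter_In in Hi as [_ Hi]. unfold nonzerob in Hi.
      destruct (excluded_middle_informative (f i = z0)); congruence.
    - exists l'; split.
      + apply NoDup_map_inv with (f := k). rewrite Hl'. apply NoDup_filter; auto.
      + rewrite fsum_filter_nonzero, <- Hl', fsum_map; auto. }
  assert (Hpush : forall l', NoDup l' -> NoDup (map k l'))
    by (intros; apply FinFun.Injective_map_NoDup; auto).
  assert (Hsums : forall z, partial_sums (fun j => f (k j)) z <-> partial_sums f z).
  { intros z; split.
    - intros [l' [Hnd Hz]]. exists (map k l'); split; [auto | rewrite fsum_map; auto].
    - intros [l [Hnd Hz]]. destruct (Hpull l Hnd) as [l' [Hnd' E]].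
      exists l'; split; congruence. }
  split; intros [Htot Hlub]; split.
  - intros l Hnd. destruct (Hpull l Hnd) as [l' [Hnd' ->]]; auto.
  - eapply is_lub_ext; [|apply Hlub]; apply Hsums.
  - intros l' Hnd'. rewrite <- fsum_map. apply Htot; auto.
  - eapply is_lub_ext; [|apply Hlub]; intros z; symmetry; apply Hsums.
Qed.

Lemma Sum_bool (f : bool -> A) s : Sum f s -> add (f true) (f false) = Some s.
Proof.
  intros [Htot [Hub Hleast]].
  assert (Hnd : NoDup [true; false]) by (repeat constructor; simpl; intuition discriminate).
  destruct (Htot _ Hnd) as [v Hv].
  simpl in Hv; rewrite padd_0 in Hv; simpl in Hv. rewrite Hv. f_equal.
  apply nle_antisym.
  - apply Hub. exists [true; false]; simpl; rewrite padd_0; auto.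
  - apply Hleast. intros x [l [Hndl Hx]].
    assert (Hincl : incl l [true; false]) by (intros [|] _; simpl; auto).
    assert (Hv' : fsum f [true; false] = Some v) by (simpl; rewrite padd_0; auto).
    destruct (fsum_incl Hndl Hincl Hv') as [a [Ha Hle]].
    rewrite Hx in Ha; injection Ha as ->; auto.
Qed.

Lemma Sum_of_prefix_sums (f : nat -> A) s :
  (forall k, exists v, fsum f (seq 0 k) = Some v) ->
  is_lub (fun z => exists k, fsum f (seq 0 k) = Some z) s -> Sum f s.
Proof.
  intros Hdef Hlub.
  assert (Hprefix : forall l, incl l (seq 0 (S (list_max l)))).
  { intros l x Hx. apply in_seq. split; [lia|].
    assert (x <= list_max l).
    { pose proof (proj1 (list_max_le l (list_max l)) (le_n _)) as Hmax.
      rewrite Forall_forall in Hmax; auto. }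
    lia. }
  assert (Hbound : forall l v, NoDup l -> fsum f l = Some v ->
            exists w, fsum f (seq 0 (S (list_max l))) = Some w /\ nle v w).
  { intros l v Hnd Hv. destruct (Hdef (S (list_max l))) as [w Hw].
    destruct (fsum_incl Hnd (Hprefix l) Hw) as [a [Ha Hle]].
    rewrite Hv in Ha; injection Ha as ->; eauto. }
  split.
  - intros l Hnd. destruct (Hdef (S (list_max l))) as [w Hw].
    destruct (fsum_incl Hnd (Hprefix l) Hw) as [a [Ha _]]; eauto.
  - eapply is_lub_cofinal; [| | apply Hlub].
    + intros z [k Hk]. exists z; split; [exists (seq 0 k); split; auto using seq_NoDup|].
      apply nle_refl.
    + intros z [l [Hnd Hz]]. destruct (Hbound l z Hnd Hz) as [w [Hw Hle]]; eauto.
Qed.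

(** * Scott continuity of sums: exchange and monotone convergence *)

Definition directed_rel (K : Type) (R : K -> K -> Prop) : Prop :=
  inhabited K /\ forall k1 k2, exists k3, R k1 k3 /\ R k2 k3.

Definition range (K : Type) (u : K -> A) (z : A) : Prop := exists k, z = u k.

Section Nets.

Variables (K : Type) (R : K -> K -> Prop).
Hypothesis R_directed : directed_rel R.

Definition monotone_net (u : K -> A) : Prop := forall k k', R k k' -> nle (u k) (u k').

Lemma range_directed (u : K -> A) : monotone_net u -> directed (range u).
Proof.
  destruct R_directed as [[k0] Hup]; intros Hu; split.
  - exists (u k0), k0; auto.
  - intros x y [k1 ->] [k2 ->]. destruct (Hup k1 k2) as [k3 [H1 H2]].
    exists (u k3); repeat split; eauto. exists k3; auto.
Qed.

Lemma net_sup_padd_r (u : K -> A) U y :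
  monotone_net u -> is_lub (range u) U -> (forall k, exists z, add (u k) y = Some z) ->
  exists t, add U y = Some t /\ is_lub (fun z => exists k, add (u k) y = Some z) t.
Proof.
  intros Hu HU Hdef.
  destruct (proj1 (proj2 A_scott) (range u) y U (range_directed Hu) HU) as [t [Ht Hlub]].
  { intros x [k ->]; auto. }
  exists t; split; auto. eapply is_lub_ext; [|apply Hlub].
  intros z; split; [intros [x [[k ->] Hz]] | intros [k Hz]]; eauto.
  exists (u k); split; [exists k|]; auto.
Qed.

Lemma net_sup_mull (u : K -> A) U c :
  monotone_net u -> is_lub (range u) U -> is_lub (range (fun k => mul c (u k))) (mul c U).
Proof.
  intros Hu HU.
  eapply is_lub_ext; [|apply (proj2 (proj2 (proj2 A_scott)) _ c U (range_directed Hu) HU)].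
  intros z; split; [intros [x [[k ->] ->]] | intros [k ->]]; [exists k | exists (u k); split; [exists k|]]; auto.
Qed.

Lemma net_sup_padd (u v w : K -> A) U V :
  monotone_net u -> monotone_net v -> (forall k, add (u k) (v k) = Some (w k)) ->
  is_lub (range u) U -> is_lub (range v) V ->
  exists W, add U V = Some W /\ is_lub (range w) W.
Proof.
  intros Hu Hv Hw HU HV.
  assert (Hmixed : forall k j, exists z, add (u k) (v j) = Some z /\ exists k', nle z (w k')).
  { intros k j. destruct (proj2 R_directed k j) as [k' [Hk Hj]].
    destruct (padd_below (Hu _ _ Hk) (Hv _ _ Hj) (Hw k')) as [z [Hz Hle]]; eauto. }
  assert (HUv : forall j, exists t, add U (v j) = Some t /\
                  is_lub (fun z => exists k, add (u k) (v j) = Some z) t).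
  { intros j. apply net_sup_padd_r; auto.
    intros k; destruct (Hmixed k j) as [z [Hz _]]; eauto. }
  destruct (choice _ HUv) as [Uv HUv'].
  destruct (@net_sup_padd_r v V U) as [W [HW HWlub]]; auto.
  { intros j; exists (Uv j); rewrite padd_comm; apply HUv'. }
  exists W; split; [rewrite padd_comm; auto|]. split.
  - intros z [k ->]. eapply nle_trans; [|apply (proj1 HWlub); exists k; rewrite padd_comm; apply HUv'].
    eapply padd_mono; [| apply nle_refl | apply Hw | apply HUv'].
    apply (proj1 HU); exists k; auto.
  - intros b Hb. apply (proj2 HWlub). intros z [j Hz].
    rewrite padd_comm, (proj1 (HUv' j)) in Hz; injection Hz as <-.
    apply (proj2 (proj2 (HUv' j))). intros z [k Hz].
    destruct (Hmixed k j) as [z' [Hz' [k' Hle]]]. rewrite Hz in Hz'; injection Hz' as <-.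
    eapply nle_trans; [apply Hle | apply Hb; exists k'; auto].
Qed.

Lemma net_sup_fsum (I : Type) (N : I -> K -> A) (r : I -> A) (L : list I) :
  (forall i, monotone_net (N i)) -> (forall i, is_lub (range (N i)) (r i)) ->
  (forall k, exists z, fsum (fun i => N i k) L = Some z) ->
  exists S, fsum r L = Some S /\ is_lub (range (fun k => fsum0 (fun i => N i k) L)) S.
Proof.
  intros HN Hr; induction L as [|i L IH]; intros Hdef.
  - destruct R_directed as [[k0] _]. exists z0; split; auto.
    eapply is_lub_ext with (P := fun z => z = z0);
      [|split; [intros z ->; apply nle_refl | intros b Hb; apply Hb; auto]].
    intros z; split; [intros ->; exists k0; auto | intros [k ->]; auto].
  - assert (HdefL : forall k, exists z, fsum (fun i => N i k) L = Some z).
    { intros k; destruct (Hdef k) as [z Hz]; simpl in Hz.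
      destruct (fsum (fun i => N i k) L); simpl in Hz; [eauto | discriminate]. }
    destruct (IH HdefL) as [S [HS HSlub]].
    assert (Hstep : forall k, add (N i k) (fsum0 (fun i => N i k) L)
                              = Some (fsum0 (fun i => N i k) (i :: L))).
    { intros k. destruct (HdefL k) as [z Hz]. destruct (Hdef k) as [z' Hz'].
      rewrite (fsum0_eq Hz), (fsum0_eq Hz'). simpl in Hz'; rewrite Hz in Hz'; auto. }
    assert (Hmono : monotone_net (fun k => fsum0 (fun i => N i k) L)).
    { intros k k' Hk. destruct (HdefL k') as [z Hz]. rewrite (fsum0_eq Hz).
      destruct (fsum_below (f := fun i => N i k) (fun j => HN j _ _ Hk) Hz) as [a [Ha Hle]].
      rewrite (fsum0_eq Ha); auto. }
    destruct (net_sup_padd (HN i) Hmono Hstep (Hr i) HSlub) as [W [HW HWlub]].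
    exists W; split; auto. simpl; rewrite HS; auto.
Qed.

End Nets.

Definition nodup_list (I : Type) : Type := { l : list I | NoDup l }.

Definition nodup_incl (I : Type) (k k' : nodup_list I) : Prop := incl (proj1_sig k) (proj1_sig k').

Lemma nodup_incl_directed (I : Type) : directed_rel (@nodup_incl I).
Proof.
  split.
  - constructor. exists []. constructor.
  - intros [l1 Hnd1] [l2 Hnd2]. destruct (NoDup_merge l1 l2) as [l [Hnd [H1 H2]]].
    exists (exist _ l Hnd); unfold nodup_incl; simpl; auto.
Qed.

Lemma partial_sum_net_monotone (I : Type) (f : I -> A) :
  fsum_total f -> monotone_net (@nodup_incl I) (fun k => fsum0 f (proj1_sig k)).
Proof.
  intros Htot [l Hnd] [l' Hnd'] Hincl; unfold nodup_incl in Hincl; simpl in *.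
  destruct (Htot l' Hnd') as [v Hv]. destruct (fsum_incl Hnd Hincl Hv) as [a [Ha Hle]].
  rewrite (fsum0_eq Ha), (fsum0_eq Hv); auto.
Qed.

Lemma Sum_partial_sum_net (I : Type) (f : I -> A) s :
  Sum f s -> is_lub (range (fun k : nodup_list I => fsum0 f (proj1_sig k))) s.
Proof.
  intros [Htot Hlub]. eapply is_lub_ext; [|apply Hlub]. intros z; split.
  - intros [l [Hnd Hz]]. exists (exist _ l Hnd); simpl; rewrite (fsum0_eq Hz); auto.
  - intros [[l Hnd] ->]; simpl. destruct (Htot l Hnd) as [v Hv].
    exists l; rewrite (fsum0_eq Hv); auto.
Qed.

Lemma Sum_padd_inv (I : Type) (f g h : I -> A) c :
  Sum h c -> (forall i, add (f i) (g i) = Some (h i)) ->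
  exists s t, Sum f s /\ Sum g t /\ add s t = Some c.
Proof.
  intros Hh Hfg.
  destruct (@Sum_below _ f h c (fun i => nle_addr (Hfg i)) Hh) as [s [Hs _]].
  destruct (@Sum_below _ g h c (fun i => nle_addl (Hfg i)) Hh) as [t [Ht _]].
  assert (Hk : forall k : nodup_list I,
            add (fsum0 f (proj1_sig k)) (fsum0 g (proj1_sig k)) = Some (fsum0 h (proj1_sig k))).
  { intros [l Hnd]; simpl. destruct (proj1 Hh l Hnd) as [v Hv].
    destruct (proj1 (fsum_padd l v Hfg) Hv) as [a [b [Ha [Hb Hab]]]].
    rewrite (fsum0_eq Ha), (fsum0_eq Hb), (fsum0_eq Hv); auto. }
  destruct (net_sup_padd (nodup_incl_directed I) (partial_sum_net_monotone (proj1 Hs))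
              (partial_sum_net_monotone (proj1 Ht)) Hk (Sum_partial_sum_net Hs)
              (Sum_partial_sum_net Ht)) as [W [HW HWlub]].
  rewrite (is_lub_unique HWlub (Sum_partial_sum_net Hh)) in HW. eauto.
Qed.

Lemma option_eq_Some_iff (T : Type) (o1 o2 : option T) :
  (forall c : T, o1 = Some c <-> o2 = Some c) -> o1 = o2.
Proof.
  destruct o1 as [a|], o2 as [b|]; intros H; auto.
  - apply H; auto.
  - discriminate (proj1 (H a) eq_refl).
  - discriminate (proj2 (H b) eq_refl).
Qed.

Lemma fsum_exchange (X Z : Type) (a : X -> Z -> A) (L : list X) (Zl : list Z) :
  (forall x, exists v, fsum (a x) Zl = Some v) ->
  (forall z, exists v, fsum (fun x => a x z) L = Some v) ->
  fsum (fun x => fsum0 (a x) Zl) L = fsum (fun z => fsum0 (fun x => a x z) L) Zl.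
Proof.
  intros Hrow; induction L as [|x L IH]; intros Hcol.
  - symmetry; apply fsum_zero; intros; unfold fsum0; auto.
  - assert (HcolL : forall z, exists v, fsum (fun x => a x z) L = Some v).
    { intros z; destruct (Hcol z) as [v Hv]; simpl in Hv.
      destruct (fsum (fun x => a x z) L); simpl in Hv; [eauto | discriminate]. }
    assert (Hstep : forall z, add (a x z) (fsum0 (fun x => a x z) L)
                              = Some (fsum0 (fun x => a x z) (x :: L))).
    { intros z. destruct (HcolL z) as [v Hv]. destruct (Hcol z) as [v' Hv'].
      rewrite (fsum0_eq Hv), (fsum0_eq Hv'). simpl in Hv'; rewrite Hv in Hv'; auto. }
    destruct (Hrow x) as [p Hp].
    simpl; rewrite (IH HcolL), (fsum0_eq Hp).
    apply option_eq_Some_iff; intros c. rewrite (fsum_padd Zl c Hstep); split.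
    + intros H. destruct (fsum (fun z => fsum0 (fun x => a x z) L) Zl) as [q|];
        simpl in H; [|discriminate]. eauto.
    + intros [p' [q [Hp' [-> Hpq]]]]. rewrite Hp in Hp'; injection Hp' as <-; auto.
Qed.

Section Fubini.

Variables (X Z : Type) (a : X -> Z -> A) (r : X -> A) (T : A).
Hypothesis Sum_rows : forall x, Sum (a x) (r x).
Hypothesis Sum_total : Sum r T.

Lemma Sum_columns_exist z : exists cz, Sum (fun x => a x z) cz.
Proof.
  destruct (@Sum_below _ (fun x => a x z) r T (fun x => term_le_Sum z (Sum_rows x)) Sum_total)
    as [cz [Hcz _]]; eauto.
Qed.

Lemma double_fsum_le_total L Zl :
  NoDup L -> NoDup Zl -> exists w, fsum (fun x => fsum0 (a x) Zl) L = Some w /\ nle w T.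
Proof.
  intros HndL HndZ. destruct (proj1 Sum_total L HndL) as [v Hv].
  assert (Hrow : forall x, nle (fsum0 (a x) Zl) (r x)).
  { intros x. destruct (proj1 (Sum_rows x) Zl HndZ) as [u Hu].
    rewrite (fsum0_eq Hu). eapply fsum_le_Sum; eauto. }
  destruct (fsum_below Hrow Hv) as [w [Hw Hle]].
  exists w; split; auto. eapply nle_trans; [apply Hle | eapply fsum_le_Sum; eauto].
Qed.

Lemma fsum_rows_sup L :
  NoDup L -> exists S, fsum r L = Some S /\
    is_lub (range (fun k : nodup_list Z => fsum0 (fun x => fsum0 (a x) (proj1_sig k)) L)) S.
Proof.
  intros HndL. apply (net_sup_fsum (nodup_incl_directed Z)).
  - intros x; exact (partial_sum_net_monotone (proj1 (Sum_rows x))).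
  - intros x; apply Sum_partial_sum_net, Sum_rows.
  - intros [Zl HndZ]; simpl. destruct (double_fsum_le_total HndL HndZ) as [w [Hw _]]; eauto.
Qed.

Variable c : Z -> A.
Hypothesis Sum_cols : forall z, Sum (fun x => a x z) (c z).

Lemma double_fsum_exchange L Zl :
  NoDup L -> NoDup Zl ->
  fsum (fun x => fsum0 (a x) Zl) L = fsum (fun z => fsum0 (fun x => a x z) L) Zl.
Proof.
  intros HndL HndZ. apply fsum_exchange.
  - intros x; apply (proj1 (Sum_rows x)); auto.
  - intros z; apply (proj1 (Sum_cols z)); auto.
Qed.

Lemma fsum_columns_sup Zl :
  NoDup Zl -> exists S, fsum c Zl = Some S /\
    is_lub (range (fun k : nodup_list X => fsum0 (fun z => fsum0 (fun x => a x z) (proj1_sig k)) Zl)) S.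
Proof.
  intros HndZ. apply (net_sup_fsum (nodup_incl_directed X)).
  - intros z; exact (partial_sum_net_monotone (proj1 (Sum_cols z))).
  - intros z; apply Sum_partial_sum_net, Sum_cols.
  - intros [L HndL]; simpl. rewrite <- (double_fsum_exchange HndL HndZ).
    destruct (double_fsum_le_total HndL HndZ) as [w [Hw _]]; eauto.
Qed.

Lemma Sum_columns : Sum c T.
Proof.
  split; [|split].
  - intros Zl HndZ. destruct (fsum_columns_sup HndZ) as [S [HS _]]; eauto.
  - intros v [Zl [HndZ Hv]]. destruct (fsum_columns_sup HndZ) as [S [HS Hlub]].
    rewrite Hv in HS; injection HS as <-.
    apply (proj2 Hlub). intros w [[L HndL] ->]; simpl.
    destruct (double_fsum_le_total HndL HndZ) as [w' [Hw' Hle]].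
    rewrite (double_fsum_exchange HndL HndZ) in Hw'. rewrite (fsum0_eq Hw'); auto.
  - intros b Hb. apply (proj2 (proj2 Sum_total)). intros v [L [HndL Hv]].
    destruct (fsum_rows_sup HndL) as [S [HS Hlub]]. rewrite Hv in HS; injection HS as <-.
    apply (proj2 Hlub). intros w [[Zl HndZ] ->]; simpl.
    destruct (fsum_columns_sup HndZ) as [S' [HS' _]].
    assert (Hcol : forall z, nle (fsum0 (fun x => a x z) L) (c z)).
    { intros z. destruct (proj1 (Sum_cols z) L HndL) as [u Hu].
      rewrite (fsum0_eq Hu). eapply fsum_le_Sum; eauto. }
    destruct (fsum_below Hcol HS') as [w [Hw Hle]].
    unfold fsum0 at 1; rewrite (double_fsum_exchange HndL HndZ), Hw.
    eapply nle_trans; [apply Hle | apply Hb; exists Zl; auto].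
Qed.

End Fubini.

Lemma Sum_exchange (X Z : Type) (a : X -> Z -> A) (r : X -> A) T :
  (forall x, Sum (a x) (r x)) -> Sum r T ->
  exists c : Z -> A, (forall z, Sum (fun x => a x z) (c z)) /\ Sum c T.
Proof.
  intros Hrows Htotal.
  destruct (choice _ (@Sum_columns_exist X Z a r T Hrows Htotal)) as [c Hc].
  exists c; split; auto. exact (Sum_columns Hrows Htotal Hc).
Qed.

Lemma le_directed : directed_rel le.
Proof. split; [constructor; exact 0 | intros k1 k2; exists (max k1 k2); lia]. Qed.

Lemma Sum_monotone_sup (X : Type) (c : nat -> X -> A) (S : nat -> A) (l : X -> A) T :
  (forall k k' x, k <= k' -> nle (c k x) (c k' x)) ->
  (forall k, Sum (c k) (S k)) ->
  (forall x, is_lub (range (fun k => c k x)) (l x)) ->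
  is_lub (range S) T -> Sum l T.
Proof.
  intros Hmono HS Hl HT.
  assert (Hfin : forall L, NoDup L -> exists v, fsum l L = Some v /\
            is_lub (range (fun k => fsum0 (c k) L)) v).
  { intros L HndL. apply (net_sup_fsum le_directed (N := fun x k => c k x)); auto.
    - intros x k k' Hk; apply Hmono; auto.
    - intros k. apply (proj1 (HS k)); auto. }
  split; [|split].
  - intros L HndL; destruct (Hfin L HndL) as [v [Hv _]]; eauto.
  - intros v [L [HndL Hv]]. destruct (Hfin L HndL) as [v' [Hv' Hlub]].
    rewrite Hv in Hv'; injection Hv' as <-.
    apply (proj2 Hlub). intros z [k ->].
    destruct (proj1 (HS k) L HndL) as [w Hw]; rewrite (fsum0_eq Hw).
    eapply nle_trans; [eapply fsum_le_Sum; eauto | apply (proj1 HT); exists k; auto].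
  - intros b Hb. apply (proj2 HT). intros z [k ->].
    apply (proj2 (proj2 (HS k))). intros w [L [HndL Hw]].
    destruct (Hfin L HndL) as [v [Hv Hlub]].
    eapply nle_trans; [apply (proj1 Hlub); exists k; rewrite (fsum0_eq Hw); auto|].
    apply Hb; exists L; auto.
Qed.

(** * Weightings *)

Section Weightings.

Variable X : Type.
Implicit Types (m : X -> A).

Lemma supp_eq m (x y : supp m) : proj1_sig x = proj1_sig y -> x = y.
Proof. destruct x as [x Hx], y as [y Hy]; simpl; intros ->; f_equal; apply proof_irrelevance. Qed.

Lemma Sum_supp m (f : X -> A) s :
  (forall x, m x = z0 -> f x = z0) -> Sum (fun t : supp m => f (proj1_sig t)) s <-> Sum f s.
Proof.
  intros Hf. apply Sum_reindex; [apply supp_eq|].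
  intros x Hx. assert (Hm : m x <> z0) by (intros E; apply Hx, Hf, E).
  exists (exist _ x Hm); auto.
Qed.

Lemma isW_iff m :
  isW m <-> (exists f : supp m -> nat, forall x y, f x = f y -> x = y) /\ exists s, Sum m s.
Proof.
  unfold isW; split; intros [Hcount [s Hs]]; split; auto; exists s;
    apply (Sum_supp (m := m) (f := m) s (fun x E => E)); auto.
Qed.

Lemma BindF_Sum (Y : Type) (g : X -> Y -> A) m (r : Y -> A) :
  BindF g m r -> forall y, Sum (fun x => mul (m x) (g x y)) (r y).
Proof.
  intros [_ Hr] y. refine (proj1 (Sum_supp _ _) (Hr y)).
  intros x ->; apply pmul_0l.
Qed.

Lemma BindF_intro (Y : Type) (g : X -> Y -> A) m (r : Y -> A) :
  isW r -> (forall y, Sum (fun x => mul (m x) (g x y)) (r y)) -> BindF g m r.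
Proof.
  intros HW Hr; split; auto; intros y. refine (proj2 (Sum_supp _ _) (Hr y)).
  intros x ->; apply pmul_0l.
Qed.

Lemma BindF_unique (Y : Type) (g g' : X -> Y -> A) m (r r' : Y -> A) :
  BindF g m r -> BindF g' m r' -> (forall x, m x <> z0 -> g x = g' x) -> r = r'.
Proof.
  intros H H' Hgg. apply functional_extensionality; intros y.
  eapply Sum_unique; [apply (BindF_Sum H y)|].
  eapply Sum_ext; [|apply (BindF_Sum H' y)]. intros x; simpl.
  destruct (excluded_middle_informative (m x = z0)) as [E|E].
  - rewrite E, !pmul_0l; auto.
  - rewrite Hgg; auto.
Qed.

Lemma isW_supp_injection m m' :
  (forall x, m x <> z0 -> m' x <> z0) -> isW m' -> exists f : supp m -> nat, forall x y, f x = f y -> x = y.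
Proof.
  intros Hsupp [[f Hf] _].
  exists (fun x : supp m => f (exist _ (proj1_sig x) (Hsupp _ (proj2_sig x)))).
  intros x y E. apply Hf in E. apply supp_eq. apply (f_equal (@proj1_sig _ _)) in E; auto.
Qed.

Lemma isW_below m m' : (forall x, nle (m x) (m' x)) -> isW m' -> isW m.
Proof.
  intros Hle Hm'. apply isW_iff; split.
  - apply (isW_supp_injection (m' := m')); auto.
    intros x Hx E; apply Hx, nle0_eq; rewrite <- E; auto.
  - apply isW_iff in Hm' as [_ [s Hs]]. destruct (Sum_below Hle Hs) as [t [Ht _]]; eauto.
Qed.

Lemma isW_mull m u : isW m -> isW (fun x => mul u (m x)).
Proof.
  intros Hm. apply isW_iff; split.
  - apply (isW_supp_injection (m' := m)); auto.
    intros x Hx E; apply Hx; rewrite E; apply pmul_0r.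
  - apply isW_iff in Hm as [_ [s Hs]]. exists (mul u s); apply Sum_mull; auto.
Qed.

Lemma isW_single m x0 : (forall x, x <> x0 -> m x = z0) -> isW m.
Proof.
  intros Hm. apply isW_iff; split.
  - exists (fun _ => 0). intros [x Hx] [y Hy] _. apply supp_eq; simpl.
    destruct (excluded_middle_informative (x = x0)) as [->|Hx0]; [|contradiction (Hx (Hm x Hx0))].
    destruct (excluded_middle_informative (y = x0)) as [->|Hy0]; [auto | contradiction (Hy (Hm y Hy0))].
  - exists (m x0); apply Sum_single; auto.
Qed.

Lemma eta_eq (x : X) : eta (A := A) x x = one A.
Proof. unfold eta; destruct (excluded_middle_informative (x = x)); congruence. Qed.

Lemma eta_neq (x y : X) : x <> y -> eta (A := A) x y = z0.
Proof. unfold eta; destruct (excluded_middle_informative (x = y)); congruence. Qed.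

Lemma eta_mul_comm (x y : X) u : mul (eta x y) u = mul u (eta x y).
Proof.
  destruct (excluded_middle_informative (x = y)) as [<-|Hne].
  - rewrite eta_eq, pmul_1l, pmul_1r; auto.
  - rewrite eta_neq, pmul_0l, pmul_0r; auto.
Qed.

Lemma isW_eta (x : X) : isW (A := A) (eta x).
Proof. apply isW_single with x; intros y Hy; apply eta_neq; auto. Qed.

Lemma Sum_eta_mull (x : X) (f : X -> A) : Sum (fun y => mul (eta x y) (f y)) (f x).
Proof.
  pose proof (Sum_single (f := fun y => mul (eta x y) (f y)) (i0 := x)) as H.
  simpl in H; rewrite eta_eq, pmul_1l in H. apply H.
  intros y Hy; rewrite eta_neq, pmul_0l; auto.
Qed.

Lemma BindF_eta (Y : Type) (g : X -> Y -> A) x : isW (g x) -> BindF g (eta x) (g x).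
Proof. intros Hg; apply BindF_intro; auto; intros y; apply Sum_eta_mull. Qed.

Lemma WSum_point_masses m :
  isW m -> WSum (fun (t : supp m) y => mul (m (proj1_sig t)) (eta (proj1_sig t) y)) m.
Proof.
  intros Hm; split; auto; intros y.
  destruct (excluded_middle_informative (m y = z0)) as [E|E].
  - rewrite E. apply Sum_zero. intros [x Hx]; simpl.
    rewrite eta_neq; [apply pmul_0r | intros ->; contradiction].
  - pose proof (Sum_single (f := fun t : supp m => mul (m (proj1_sig t)) (eta (proj1_sig t) y))
                  (i0 := exist _ y E)) as H.
    simpl in H; rewrite eta_eq, pmul_1r in H. apply H.
    intros [x Hx] Hne; simpl. rewrite eta_neq; [apply pmul_0r|].
    intros ->; apply Hne, supp_eq; auto.
Qed.

End Weightings.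

End Algebra.

Section Semantics.

Variables (Sigma Act : Type) (actI : Act -> Sigma -> Sigma -> A).
Hypothesis actI_isW : forall (a : Act) (s : Sigma), isW (actI a s).
Variables (TestI : Type) (testI : TestI -> Sigma -> Prop).

Local Notation den := (den actI testI).
Local Notation prog := (prog A Act TestI).
Local Notation ev := (eval testI).
Implicit Types (s x y : Sigma) (a : Act) (m r : Sigma -> A) (C : prog).

Lemma den_isW C s m : den C s m -> isW m.
Proof.
  revert s m; induction C; simpl; intros s m H.
  - subst; apply isW_eta.
  - destruct H as [m1 [g [_ [_ H]]]]; apply H.
  - destruct H as [m1 [m2 [_ [_ H]]]]; apply H.
  - subst; apply isW_mull, isW_eta.
  - destruct H as [F [HF <-]]; apply HF.
  - subst; auto.
Qed.

Lemma den_functional C s m m' : den C s m -> den C s m' -> m = m'.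
Proof.
  revert s m m'; induction C as [| C1 IH1 C2 IH2 | C1 IH1 C2 IH2 | e | C IH e e' | a];
    simpl; intros s m m' H H'.
  - congruence.
  - destruct H as [m1 [g [H1 [H2 H3]]]], H' as [m1' [g' [H1' [H2' H3']]]].
    rewrite <- (IH1 _ _ _ H1 H1') in H2', H3'.
    eapply BindF_unique; eauto.
  - destruct H as [m1 [m2 [H1 [H2 [_ H3]]]]], H' as [m1' [m2' [H1' [H2' [_ H3']]]]].
    rewrite <- (IH1 _ _ _ H1 H1'), <- (IH2 _ _ _ H2 H2') in H3'.
    apply functional_extensionality; intros y. specialize (H3 y); specialize (H3' y). congruence.
  - congruence.
  - destruct H as [F [HF <-]], H' as [F' [HF' <-]].
    apply functional_extensionality; intros y.
    destruct (proj2 (proj2 HF) F' (proj1 HF') (proj1 (proj2 HF')) s) as [d [_ Hd]].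
    destruct (proj2 (proj2 HF') F (proj1 HF) (proj1 (proj2 HF)) s) as [d' [_ Hd']].
    apply nle_antisym; [exists (d y) | exists (d' y)]; auto.
  - congruence.
Qed.

Definition defined_at (C : prog) (s : Sigma) : Prop := exists m, den C s m.

Definition bind_den (C : prog) (m r : Sigma -> A) : Prop :=
  exists g, (forall x, m x <> z0 -> den C x (g x)) /\ BindF g m r.

Lemma bind_den_functional C m r r' : bind_den C m r -> bind_den C m r' -> r = r'.
Proof.
  intros [g [Hg H]] [g' [Hg' H']]. eapply BindF_unique; eauto.
  intros x Hx; eapply den_functional; eauto.
Qed.

Lemma bind_den_isW C m r : bind_den C m r -> isW r.
Proof. intros [g [_ [H _]]]; auto. Qed.

Lemma den_assume e s : den (Assume Act e) s (fun y => mul (ev e s) (eta s y)).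
Proof. reflexivity. Qed.

Lemma den_assume_seq C e x mC :
  den C x mC -> den (Seq (Assume Act e) C) x (fun y => mul (ev e x) (mC y)).
Proof.
  intros HC. exists (fun y => mul (ev e x) (eta x y)), (fun _ => mC).
  split; [reflexivity | split].
  - intros z Hz. destruct (excluded_middle_informative (x = z)) as [<-|Hne]; auto.
    rewrite eta_neq, pmul_0r in Hz; tauto.
  - apply BindF_intro; [apply isW_mull, (den_isW HC)|]. intros y.
    eapply Sum_ext; [|apply (Sum_eta_mull x (fun _ => mul (ev e x) (mC y)))].
    intros z; simpl. rewrite pmul_assoc, eta_mul_comm; auto.
Qed.

Lemma bind_den_Sum C m r (h : Sigma -> Sigma -> A) :
  (forall x, den C x (h x)) -> bind_den C m r -> forall y, Sum (fun x => mul (m x) (h x y)) (r y).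
Proof.
  intros Hh [g [Hg Hr]] y. eapply Sum_ext; [|apply (BindF_Sum Hr y)]. intros x; simpl.
  destruct (excluded_middle_informative (m x = z0)) as [E|E].
  - rewrite E, !pmul_0l; auto.
  - rewrite (den_functional (Hg x E) (Hh x)); auto.
Qed.

(** * Loops: the least fixed point as the supremum of the Kleene iterates *)

Definition kernel_le (f g : Sigma -> Sigma -> A) : Prop := forall x y, nle (f x y) (g x y).

Section Kleene.

Variables (C : prog) (e e' : expr A TestI) (F : Sigma -> Sigma -> A).
Hypothesis F_lfp : IsLfp testI (den C) e e' F.
Variable gC : Sigma -> Sigma -> A.
Hypothesis gC_den : forall x, den C x (gC x).

Local Notation Phi := (PhiRel testI (den C) e e').

Lemma PhiRel_iff f x r :
  Phi f x r <-> exists B, BindF f (gC x) B /\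
    WAdd (fun y => mul (ev e x) (B y)) (fun y => mul (ev e' x) (eta x y)) r.
Proof.
  split.
  - intros [mC [B [HC HB]]]. rewrite (den_functional HC (gC_den x)) in HB; eauto.
  - intros [B HB]. exists (gC x), B; auto.
Qed.

Lemma lfp_unfold : exists BF : Sigma -> Sigma -> A, forall x, BindF F (gC x) (BF x) /\
  WAdd (fun y => mul (ev e x) (BF x y)) (fun y => mul (ev e' x) (eta x y)) (F x).
Proof. exact (choice _ (fun x => proj1 (PhiRel_iff _ _ _) (proj1 (proj2 F_lfp) x))). Qed.

Lemma PhiRel_below_lfp f x :
  kernel_le f F -> exists r, Phi f x r /\ forall y, nle (r y) (F x y).
Proof.
  intros Hle. destruct lfp_unfold as [BF HBF]. destruct (HBF x) as [HBFx [_ HFx]].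
  assert (Hbody : forall y, exists v, Sum (fun z => mul (gC x z) (f z y)) v /\ nle v (BF x y)).
  { intros y. apply (Sum_below (g := fun z => mul (gC x z) (F z y))).
    - intros z; apply pmul_monol, Hle.
    - apply (BindF_Sum HBFx). }
  destruct (choice _ Hbody) as [B HB].
  assert (Hsum : forall y, exists v, add (mul (ev e x) (B y)) (mul (ev e' x) (eta x y)) = Some v
                                     /\ nle v (F x y)).
  { intros y. eapply padd_below; [apply pmul_monol, (HB y) | apply nle_refl | apply HFx]. }
  destruct (choice _ Hsum) as [r Hr].
  exists r; split; [|intros y; apply (Hr y)].
  apply PhiRel_iff; exists B; split; [|split].
  - apply BindF_intro; [|intros y; apply (HB y)].
    apply (isW_below (m' := BF x)); [intros y; apply (HB y) | apply HBFx].
  - apply (isW_below (m' := F x)); [intros y; apply (Hr y) | apply F_lfp].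
  - intros y; apply (Hr y).
Qed.

Lemma PhiRel_mono f f' x r r' :
  kernel_le f f' -> Phi f x r -> Phi f' x r' -> forall y, nle (r y) (r' y).
Proof.
  intros Hle H H' y.
  apply PhiRel_iff in H as [B [HB [_ Hr]]], H' as [B' [HB' [_ Hr']]].
  assert (HBB' : nle (B y) (B' y)).
  { apply (Sum_mono (f := fun z => mul (gC x z) (f z y)) (g := fun z => mul (gC x z) (f' z y))).
    - intros z; apply pmul_monol, Hle.
    - apply (BindF_Sum HB).
    - apply (BindF_Sum HB'). }
  eapply padd_mono; [apply pmul_monol, HBB' | apply nle_refl | apply Hr | apply Hr'].
Qed.

(* [Phi] is partial, so the iterates are chosen among its values below [F], where
   [PhiRel_below_lfp] guarantees that it is defined. *)
Definition kleene_step (f : Sigma -> Sigma -> A) (x : Sigma) : Sigma -> A :=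
  epsilon (inhabits (fun _ : Sigma => z0)) (fun r => Phi f x r /\ forall y, nle (r y) (F x y)).

Fixpoint kleene (k : nat) : Sigma -> Sigma -> A :=
  match k with
  | 0 => fun _ _ => z0
  | S k => kleene_step (kleene k)
  end.

Lemma kleene_step_spec f x :
  kernel_le f F -> Phi f x (kleene_step f x) /\ forall y, nle (kleene_step f x y) (F x y).
Proof. intros Hle. unfold kleene_step; apply epsilon_spec, PhiRel_below_lfp, Hle. Qed.

Lemma kleene_le_lfp k : kernel_le (kleene k) F.
Proof.
  induction k as [|k IH]; intros x y; simpl.
  - apply nle0.
  - apply (kleene_step_spec x IH).
Qed.

Lemma kleene_PhiRel k x : Phi (kleene k) x (kleene (S k) x).
Proof. apply (kleene_step_spec x (kleene_le_lfp k)). Qed.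

Lemma kleene_le_S k : kernel_le (kleene k) (kleene (S k)).
Proof.
  induction k as [|k IH]; intros x y; [apply nle0|].
  eapply PhiRel_mono; [apply IH | apply kleene_PhiRel | apply kleene_PhiRel].
Qed.

Lemma kleene_mono k k' : k <= k' -> kernel_le (kleene k) (kleene k').
Proof.
  intros Hk; induction Hk as [|k' _ IH]; intros x y; [apply nle_refl|].
  eapply nle_trans; [apply IH | apply kleene_le_S].
Qed.

Lemma kleene_monotone_net x y : monotone_net le (fun k => kleene k x y).
Proof. intros k k' Hk; apply kleene_mono; auto. Qed.

Definition kleene_sup (x y : Sigma) : A :=
  epsilon (inhabits z0) (is_lub (range (fun k => kleene k x y))).

Lemma kleene_sup_lub x y : is_lub (range (fun k => kleene k x y)) (kleene_sup x y).
Proof.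
  unfold kleene_sup; apply epsilon_spec, (proj1 A_scott), (range_directed le_directed), kleene_monotone_net.
Qed.

Lemma kleene_sup_le_lfp : kernel_le kleene_sup F.
Proof.
  intros x y. apply (proj2 (kleene_sup_lub x y)). intros z [k ->]; apply kleene_le_lfp.
Qed.

Lemma kleene_sup_shift x y : is_lub (range (fun k => kleene (S k) x y)) (kleene_sup x y).
Proof.
  eapply is_lub_cofinal; [| |apply kleene_sup_lub].
  - intros z [k ->]. exists (kleene (S k) x y); split; [exists k; auto | apply kleene_mono; auto].
  - intros z [k ->]. exists (kleene (S k) x y); split; [exists (S k) | apply nle_refl]; auto.
Qed.

Section KleeneSupFixpoint.

Variables (x : Sigma) (B : nat -> Sigma -> A).
Hypothesis B_bind : forall k, BindF (kleene k) (gC x) (B k).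
Hypothesis B_step : forall k,
  WAdd (fun y => mul (ev e x) (B k y)) (fun y => mul (ev e' x) (eta x y)) (kleene (S k) x).

Lemma body_monotone_net y : monotone_net le (fun k => B k y).
Proof.
  intros k k' Hk.
  apply (Sum_mono (f := fun z => mul (gC x z) (kleene k z y))
                  (g := fun z => mul (gC x z) (kleene k' z y))).
  - intros z; apply pmul_monol, kleene_mono; auto.
  - apply (BindF_Sum (B_bind k)).
  - apply (BindF_Sum (B_bind k')).
Qed.

Lemma Sum_body_kleene_sup y BG :
  is_lub (range (fun k => B k y)) BG -> Sum (fun z => mul (gC x z) (kleene_sup z y)) BG.
Proof.
  intros HBG. apply (Sum_monotone_sup (c := fun k z => mul (gC x z) (kleene k z y))
                                      (S := fun k => B k y)); auto.
  - intros k k' z Hk; apply pmul_monol, kleene_mono; auto.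
  - intros k; apply (BindF_Sum (B_bind k)).
  - intros z. apply (net_sup_mull le_directed); [apply kleene_monotone_net | apply kleene_sup_lub].
Qed.

Lemma kleene_sup_unfold y BG :
  is_lub (range (fun k => B k y)) BG ->
  add (mul (ev e x) BG) (mul (ev e' x) (eta x y)) = Some (kleene_sup x y).
Proof.
  intros HBG.
  destruct (net_sup_padd_r le_directed (u := fun k => mul (ev e x) (B k y))
              (y := mul (ev e' x) (eta x y)) (U := mul (ev e x) BG)) as [t [Ht Hlub]].
  - intros k k' Hk; apply pmul_monol, body_monotone_net; auto.
  - apply (net_sup_mull le_directed); [apply body_monotone_net | auto].
  - intros k; exists (kleene (S k) x y); apply B_step.
  - rewrite Ht; f_equal. eapply is_lub_unique; [apply Hlub|].
    eapply is_lub_ext; [|apply kleene_sup_shift].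
    intros z; split; intros [k Hz]; exists k; [subst; apply B_step|].
    rewrite (proj2 (B_step k) y) in Hz; injection Hz; auto.
Qed.

End KleeneSupFixpoint.

Lemma kleene_sup_fixpoint x : Phi kleene_sup x (kleene_sup x).
Proof.
  destruct (choice _ (fun k => proj1 (PhiRel_iff _ _ _) (kleene_PhiRel k x))) as [B HB].
  assert (HBG : forall y, exists BG, is_lub (range (fun k => B k y)) BG).
  { intros y. apply (proj1 A_scott), (range_directed le_directed).
    apply (body_monotone_net (x := x)); intros k; apply HB. }
  destruct (choice _ HBG) as [BG HBGlub].
  destruct lfp_unfold as [BF HBF].
  apply PhiRel_iff; exists BG; split; [|split].
  - apply BindF_intro; [|intros y; apply Sum_body_kleene_sup with B; auto; intros k; apply HB].
    apply (isW_below (m' := BF x)); [|apply HBF].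
    intros y. apply (proj2 (HBGlub y)). intros z [k ->].
    apply (Sum_mono (f := fun z => mul (gC x z) (kleene k z y))
                    (g := fun z => mul (gC x z) (F z y))).
    + intros z; apply pmul_monol, kleene_le_lfp.
    + apply (BindF_Sum (proj1 (HB k))).
    + apply (BindF_Sum (proj1 (HBF x))).
  - apply (isW_below (m' := F x)); [intros y; apply kleene_sup_le_lfp | apply F_lfp].
  - intros y. apply kleene_sup_unfold with B; auto; intros k; apply HB.
Qed.

Lemma lfp_kleene_sup x y : is_lub (range (fun k => kleene k x y)) (F x y).
Proof.
  replace (F x y) with (kleene_sup x y); [apply kleene_sup_lub|].
  apply nle_antisym; [apply kleene_sup_le_lfp|].
  assert (Hsup_isW : forall z, isW (kleene_sup z)).
  { intros z. apply (isW_below (m' := F z)); [intros w; apply kleene_sup_le_lfp | apply F_lfp]. }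
  destruct (proj2 (proj2 F_lfp) kleene_sup Hsup_isW kleene_sup_fixpoint x) as [d [_ Hd]].
  exists (d y); auto.
Qed.

Section Unrolling.

Variables (s : Sigma) (M E : nat -> Sigma -> A).
Hypothesis M_0 : M 0 = eta s.
Hypothesis M_S : forall n, bind_den (Seq (Assume Act e) C) (M n) (M (S n)).
Hypothesis E_n : forall n, bind_den (Assume Act e') (M n) (E n).

Lemma Sum_M_S j (f : Sigma -> Sigma -> A) y (B : Sigma -> A) T :
  (forall x, Sum (fun z => mul (gC x z) (f z y)) (B x)) ->
  Sum (fun x => mul (M j x) (mul (ev e x) (B x))) T ->
  Sum (fun z => mul (M (S j) z) (f z y)) T.
Proof.
  intros HB HT.
  assert (Hrows : forall x, Sum (fun z => mul (M j x) (mul (ev e x) (mul (gC x z) (f z y))))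
                                (mul (M j x) (mul (ev e x) (B x))))
    by (intros x; apply Sum_mull, Sum_mull, HB).
  destruct (Sum_exchange Hrows HT) as [c [Hc HcT]].
  eapply Sum_ext; [|apply HcT]. intros z. eapply Sum_unique; [apply (Hc z)|].
  eapply Sum_ext; [|apply (Sum_mulr (f z y) (bind_den_Sum (fun x => den_assume_seq e (gC_den x)) (M_S j) z))].
  intros x; simpl; rewrite !pmul_assoc; auto.
Qed.

Lemma Sum_M_lfp j y : exists v, Sum (fun x => mul (M j x) (F x y)) v.
Proof.
  destruct lfp_unfold as [BF HBF].
  revert y; induction j as [|j IH]; intros y.
  - rewrite M_0. exists (F s y); apply (Sum_eta_mull s (fun z => F z y)).
  - destruct (IH y) as [v Hv].
    destruct (Sum_below (f := fun x => mul (M j x) (mul (ev e x) (BF x y))) (t := v)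
                (g := fun x => mul (M j x) (F x y))) as [T [HT _]]; auto.
    { intros x; apply pmul_monol, (nle_addr (proj2 (proj2 (HBF x)) y)). }
    exists T. apply (Sum_M_S (B := fun x => BF x y)); auto.
    intros x; apply (BindF_Sum (proj1 (HBF x))).
Qed.

Lemma Sum_unroll_step j k y v :
  Sum (fun x => mul (M j x) (kleene (S k) x y)) v ->
  exists w, Sum (fun z => mul (M (S j) z) (kleene k z y)) w /\ add w (E j y) = Some v.
Proof.
  intros Hv.
  destruct (choice _ (fun x => proj1 (PhiRel_iff _ _ _) (kleene_PhiRel k x))) as [B HB].
  destruct (Sum_padd_inv (f := fun x => mul (M j x) (mul (ev e x) (B x y)))
              (g := fun x => mul (M j x) (mul (ev e' x) (eta x y))) Hv)
    as [w [t [Hw [Ht Hwt]]]].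
  { intros x. apply pmul_addl, (proj2 (proj2 (HB x))). }
  exists w; split.
  - apply (Sum_M_S (B := fun x => B x y)); auto.
    intros x; apply (BindF_Sum (proj1 (HB x))).
  - rewrite (Sum_unique Ht (bind_den_Sum (den_assume e') (E_n j) y)) in Hwt; auto.
Qed.

Lemma Sum_M_kleene k j y : exists v, Sum (fun x => mul (M j x) (kleene k x y)) v /\
  fsum (fun n => E (j + n) y) (seq 0 k) = Some v.
Proof.
  revert j; induction k as [|k IH]; intros j.
  - exists z0; split; [apply Sum_zero; intros x; apply pmul_0r | reflexivity].
  - destruct (Sum_M_lfp j y) as [u Hu].
    destruct (Sum_below (f := fun x => mul (M j x) (kleene (S k) x y)) (t := u)
                (g := fun x => mul (M j x) (F x y))) as [v [Hv _]]; auto.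
    { intros x; apply pmul_monol, kleene_le_lfp. }
    destruct (Sum_unroll_step Hv) as [w [Hw Hwv]].
    destruct (IH (S j)) as [w' [Hw' Hexits]].
    rewrite (Sum_unique Hw' Hw) in Hexits.
    exists v; split; auto.
    simpl; rewrite <- seq_shift, fsum_map.
    replace (fun n => E (j + S n) y) with (fun n => E (S j + n) y)
      by (apply functional_extensionality; intros n; f_equal; lia).
    rewrite Hexits; simpl. rewrite <- plus_n_O, padd_comm; auto.
Qed.

Lemma Sum_exits y : Sum (fun n => E n y) (F s y).
Proof.
  assert (Hprefix : forall k, fsum (fun n => E n y) (seq 0 k) = Some (kleene k s y)).
  { intros k. destruct (Sum_M_kleene k 0 y) as [v [Hv Hexits]]. simpl in Hexits.
    rewrite Hexits. f_equal.
    eapply Sum_unique; [apply Hv|]. rewrite M_0. apply (Sum_eta_mull s (fun z => kleene k z y)). }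
  apply Sum_of_prefix_sums.
  - intros k; rewrite Hprefix; eauto.
  - eapply is_lub_ext; [|apply (lfp_kleene_sup s y)]. intros z; split.
    + intros [k ->]; exists k; auto.
    + intros [k Hk]. rewrite Hprefix in Hk; injection Hk as <-. exists k; auto.
Qed.

End Unrolling.

End Kleene.

(** * Completeness *)

Local Notation derives := (derives testI (Omega actI testI)).

Lemma SubW_eta s : SubW (fun m => m = eta s).
Proof. intros m ->; apply isW_eta. Qed.

Lemma SubW_den C s : SubW (den C s).
Proof. intros m; apply den_isW. Qed.

Definition point_derivable (C : prog) : Prop :=
  forall s, defined_at C s -> derives (fun m => m = eta s) C (den C s).

Lemma derives_bind_den C m :
  isW m -> (forall x, m x <> z0 -> defined_at C x) -> point_derivable C ->
  derives (fun m' => m' = m) C (bind_den C m).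
Proof.
  intros Hm Hdef HC.
  assert (Hg : exists g, forall x, m x <> z0 -> den C x (g x)).
  { apply (choice (fun x mx => m x <> z0 -> den C x mx)). intros x.
    destruct (excluded_middle_informative (m x = z0)) as [E|E].
    - exists (fun _ => z0); contradiction.
    - destruct (Hdef x E) as [mx Hmx]; eauto. }
  destruct Hg as [g Hg].
  set (P := fun t : supp m => scaleL (m (proj1_sig t)) (fun m' => m' = eta (proj1_sig t))).
  set (P' := fun t : supp m => scaleL (m (proj1_sig t)) (den C (proj1_sig t))).
  assert (Hchoice : derives (bigoplus P) C (bigoplus P')).
  { apply R_Choice; [intros r [ms [_ [Hr _]]]; auto | intros r [ms [_ [Hr _]]]; auto|].
    intros [x Hx]; unfold P, P'; simpl. apply R_Scale.
    - intros r [m0 [-> ->]]; apply isW_mull, isW_eta.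
    - intros r [m0 [Hm0 ->]]; apply isW_mull, (den_isW Hm0).
    - apply HC, Hdef, Hx. }
  eapply R_Conseq; [ | | | apply Hchoice | ].
  - intros m' ->; auto.
  - intros r [g' Hr]; apply (bind_den_isW (ex_intro _ g' Hr)).
  - intros m' ->. eexists; split; [|apply WSum_point_masses, Hm].
    intros t; exists (eta (proj1_sig t)); auto.
  - intros r [ms [Hms [Hr Hsum]]]. exists g; split; auto. split; auto. intros y.
    eapply Sum_ext; [|apply (Hsum y)]. intros [x Hx]; simpl.
    destruct (Hms (exist _ x Hx)) as [m0 [Hm0 ->]]; simpl in *.
    rewrite (den_functional Hm0 (Hg x Hx)); auto.
Qed.

Lemma derives_bind_den_set C (Phi : asrt A Sigma) :
  SubW Phi -> (forall m, Phi m -> forall x, m x <> z0 -> defined_at C x) -> point_derivable C ->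
  derives Phi C (fun r => exists m, Phi m /\ bind_den C m r).
Proof.
  intros HPhi Hdef HC.
  set (T := { m : Sigma -> A | Phi m }).
  assert (Hexists : derives (fun m => exists t : T, m = proj1_sig t) C
                            (fun r => exists t : T, bind_den C (proj1_sig t) r)).
  { apply R_Exists with (P := fun (t : T) m => m = proj1_sig t)
                        (P' := fun (t : T) => bind_den C (proj1_sig t)).
    - intros m [[m0 H0] ->]; auto.
    - intros r [t Hr]; eapply bind_den_isW; eauto.
    - intros [m0 H0]; simpl. apply derives_bind_den; auto. eapply Hdef; eauto. }
  eapply R_Conseq; [apply HPhi | | | apply Hexists | ].
  - intros r [m [_ Hr]]; eapply bind_den_isW; eauto.
  - intros m Hm; exists (exist _ m Hm); auto.
  - intros r [[m0 H0] Hr]; eauto.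
Qed.

Lemma point_derivable_skip : point_derivable (Skip A Act TestI).
Proof.
  intros s _. apply R_Conseq with (phi := fun m => m = eta s) (psi := fun m => m = eta s);
    auto using SubW_eta, SubW_den, R_Skip.
Qed.

Lemma point_derivable_atom a : point_derivable (Atom A TestI a).
Proof.
  intros s _. apply R_Ax; [| apply SubW_eta | apply SubW_den].
  split; [apply SubW_eta|]. split; [apply SubW_den|]. split; [eauto|].
  intros m ->. exists (actI a), (actI a s); simpl.
  split; [reflexivity|]. split; [apply BindF_eta; auto | reflexivity].
Qed.

Lemma point_derivable_assume e : point_derivable (Assume Act e).
Proof.
  intros s _.
  assert (HW : SubW (scaleR (fun m => m = eta s) (ev e s))).
  { intros r [m0 [-> ->]]. apply isW_single with s; intros y Hy.
    rewrite eta_neq; auto. apply pmul_0l. }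
  apply R_Conseq with (phi := fun m => m = eta s) (psi := scaleR (fun m => m = eta s) (ev e s));
    [apply SubW_eta | apply SubW_den | auto | apply R_Assume | ].
  - apply SubW_eta.
  - exact HW.
  - intros m x -> Hx. destruct (excluded_middle_informative (s = x)) as [->|Hne]; auto.
    rewrite eta_neq in Hx; tauto.
  - intros r [m0 [-> ->]]; simpl. apply functional_extensionality; intros y.
    apply eta_mul_comm.
Qed.

Lemma point_derivable_seq C1 C2 :
  point_derivable C1 -> point_derivable C2 -> point_derivable (Seq C1 C2).
Proof.
  intros HC1 HC2 s [m [m1 [g [H1 [H2 H3]]]]].
  apply R_Seq with (th := den C1 s); [apply SubW_eta | apply SubW_den | |].
  - apply HC1; exists m1; auto.
  - eapply R_Conseq; [apply SubW_den | apply SubW_den | | apply (derives_bind_den (m := m1)) | ].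
    + intros m' Hm'; eapply den_functional; eauto.
    + apply (den_isW H1).
    + intros x Hx; exists (g x); auto.
    + auto.
    + intros r [g' Hr]; exists m1, g'; auto.
Qed.

Lemma point_derivable_plus C1 C2 :
  point_derivable C1 -> point_derivable C2 -> point_derivable (Plus C1 C2).
Proof.
  intros HC1 HC2 s [m [m1 [m2 [H1 [H2 _]]]]].
  apply R_Conseq with (phi := fun m => m = eta s) (psi := oplus (den C1 s) (den C2 s));
    [apply SubW_eta | apply SubW_den | auto | apply R_Plus | ].
  - apply SubW_eta.
  - intros r [ms [_ [Hr _]]]; auto.
  - apply HC1; exists m1; auto.
  - apply HC2; exists m2; auto.
  - intros r [ms [Hms [Hr Hsum]]]. exists (ms true), (ms false).
    split; [apply (Hms true)|]. split; [apply (Hms false)|]. split; auto.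
    intros y. apply (Sum_bool (f := fun b => ms b y)); auto.
Qed.

Fixpoint unroll (D : prog) (s : Sigma) (n : nat) : asrt A Sigma :=
  match n with
  | 0 => fun m => m = eta s
  | S n => fun r => exists m, unroll D s n m /\ bind_den D m r
  end.

Lemma unroll_SubW D s n : SubW (unroll D s n).
Proof.
  destruct n; simpl; [apply SubW_eta|].
  intros r [m [_ Hr]]; eapply bind_den_isW; eauto.
Qed.

Lemma unroll_functional D s n m m' : unroll D s n m -> unroll D s n m' -> m = m'.
Proof.
  revert m m'; induction n as [|n IH]; simpl; intros m m' H H'.
  - congruence.
  - destruct H as [m0 [H0 Hm]], H' as [m0' [H0' Hm']].
    rewrite (IH _ _ H0 H0') in Hm. eapply bind_den_functional; eauto.
Qed.

Lemma unroll_exits_converge C e e' F gC s :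
  IsLfp testI (den C) e e' F -> (forall x, den C x (gC x)) ->
  converges (fun n r => exists m, unroll (Seq (Assume Act e) C) s n m /\ bind_den (Assume Act e') m r)
            (fun r => r = F s).
Proof.
  intros HF HgC E HE.
  destruct (choice _ (fun n => match HE n with ex_intro _ m (conj Hm _) => ex_intro _ m Hm end))
    as [M HM].
  assert (Hprev : forall n m, unroll (Seq (Assume Act e) C) s n m -> m = M n)
    by (intros n m Hm; apply (unroll_functional Hm (HM n))).
  exists (F s); split; auto. split; [apply HF|]. intros y.
  apply (Sum_exits HF HgC (s := s) (M := M)).
  - apply (HM 0).
  - intros n. destruct (HM (S n)) as [m [Hm HMn]]. rewrite (Hprev n m Hm) in HMn; auto.
  - intros n. destruct (HE n) as [m [Hm HEn]]. rewrite (Hprev n m Hm) in HEn; auto.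
Qed.

Lemma point_derivable_iter C e e' : point_derivable C -> point_derivable (Iter C e e').
Proof.
  intros HC s [m [F [HF <-]]].
  destruct (choice _ (fun x => match proj1 (proj2 HF) x with
                               | ex_intro _ mC (ex_intro _ _ (conj HmC _)) => ex_intro _ mC HmC
                               end)) as [gC HgC].
  set (D := Seq (Assume Act e) C).
  assert (HD : point_derivable D)
    by (apply point_derivable_seq; [apply point_derivable_assume | exact HC]).
  assert (HDdef : forall x, defined_at D x)
    by (intros x; eexists; apply den_assume_seq, HgC).
  apply R_Conseq with (phi := unroll D s 0) (psi := fun r => r = F s);
    [apply SubW_eta | apply SubW_den | auto | | intros r ->; exists F; auto].
  apply R_Iter with (psis := fun n r => exists m, unroll D s n m /\ bind_den (Assume Act e') m r).
  - apply unroll_SubW.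
  - intros r ->; apply HF.
  - apply (unroll_exits_converge HF HgC).
  - intros n. apply derives_bind_den_set; auto using unroll_SubW.
  - intros n. apply derives_bind_den_set; auto using unroll_SubW, point_derivable_assume.
    intros; eexists; apply den_assume.
Qed.

Lemma point_derivable_all C : point_derivable C.
Proof.
  induction C.
  - apply point_derivable_skip.
  - apply point_derivable_seq; auto.
  - apply point_derivable_plus; auto.
  - apply point_derivable_assume.
  - apply point_derivable_iter; auto.
  - apply point_derivable_atom.
Qed.

Lemma valid_derives C (phi psi : asrt A Sigma) :
  SubW phi -> SubW psi -> valid actI testI phi C psi -> derives phi C psi.
Proof.
  intros Hphi Hpsi Hvalid.
  apply R_Conseq with (phi := phi) (psi := fun r => exists m, phi m /\ bind_den C m r);
    [apply Hphi | apply Hpsi | auto | |].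
  - apply derives_bind_den_set; [apply Hphi | | apply point_derivable_all].
    intros m Hm x Hx. destruct (Hvalid m Hm) as [g [_ [Hg _]]]. exists (g x); auto.
  - intros r [m [Hm Hr]]. destruct (Hvalid m Hm) as [g [r' [Hg [Hbind Hr']]]].
    rewrite (bind_den_functional Hr (ex_intro _ g (conj Hg Hbind))); auto.
Qed.

End Semantics.

End Completeness.

Theorem theorem3p7
  (A : PSR) (HA_ord : naturally_ordered A) (HA_scott : scott_continuous A)
  (HA_top : has_top A)
  (Sigma Act : Type) (actI : Act -> Sigma -> Sigma -> A)
  (HactW : forall a s, isW (actI a s))
  (TestI : Type) (testI : TestI -> Sigma -> Prop)
  (C : prog A Act TestI) (phi psi : asrt A Sigma) :
  SubW phi -> SubW psi ->
  well_formed actI testI C ->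
  valid actI testI phi C psi ->
  derives testI (Omega actI testI) phi C psi.
Proof.
  intros Hphi Hpsi _ Hvalid.
  exact (valid_derives HA_ord HA_scott HactW Hphi Hpsi Hvalid).
Qed.
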